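(* Let $R:\mathbb R^N\to\mathbb R\cup\{+\infty\}$ be a polyhedral function of the form $$R(x)=\max_{i=1,\dots,k}\{\langle a_i,x\rangle-\alpha_i\}+\iota_{\bigcap_{i=k+1}^m\{x:\langle a_i,x\rangle-\alpha_i\le0\}}(x),$$ with $1\le k\le m$, $a_i\in\mathbb R^N$, $\alpha_i\in\mathbb R$, and $\mathrm{dom}(R)\neq\emptyset$. For $x\in\mathrm{dom}(R)$ let $I^{\max}(x)=\{i\in\{1,\dots,k\}:\langle a_i,x\rangle-\alpha_i=R(x)\}$, $I^{\mathrm{feas}}(x)=\{i\in\{k+1,\dots,m\}:\langle a_i,x\rangle=\alpha_i\}$, and for $I\subset\{1,\dots,m\}$ set $M_I=\{x\in\mathrm{dom}(R):I^{\max}(x)\cup I^{\mathrm{feas}}(x)=I\}$ and $M_I^*=\mathrm{ri}(\mathrm{conv}\{a_i:i\in I\cap\{1,\dots,k\}\})+\mathrm{ri}(\mathrm{cone}\{a_i:i\in I\cap\{k+1,\dots,m\}\})$ (with $\mathrm{cone}\,\emptyset=\{0\}$). Then $\{M_I: M_I\neq\emptyset\}$ is a stratification of $\mathrm{dom}(R)$, $J_R(M_I)=M_I^*$ and $J_{R^*}(M_I^* )=M_I$ whenever $M_I\neq\emptyset$, and $R$ is mirror-stratifiable with respect to $\{M_I\}_{M_I\ne\emptyset}$ and $\{M_I^*\}_{M_I\ne\emptyset}$.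
   Context: $\iota_C$ denotes the indicator function of $C$ (0 on $C$, $+\infty$ outside); $\mathrm{ri}$ is the relative interior, $\mathrm{conv}$ the convex hull, $\mathrm{cone}$ the convex conic hull. A stratification of a set $D$ is a finite partition $\mathcal S$ of $D$ into nonempty sets called strata such that for any strata $M,M'$, $M\cap\mathrm{cl}(M')\neq\emptyset$ implies $M\subset\mathrm{cl}(M')$; ordered by $M\le M'$ iff $M\subset\mathrm{cl}(M')$. For a proper lsc convex $R$ with conjugate $R^*$, $J_R(S)=\bigcup_{x\in S}\mathrm{ri}(\partial R(x))$ and $J_{R^*}$ analogously. $R$ is mirror-stratifiable with respect to a stratification $\mathcal S$ of $\mathrm{dom}(\partial R)$ and a stratification $\mathcal S^*$ of $\mathrm{dom}(\partial R^* )$ if (i) $J_R$ maps $\mathcal S$ bijectively onto $\mathcal S^*$ with inverse $J_{R^*}$, i.e. for all $M\in\mathcal S$, $M^*\in\mathcal S^*$: $M^*=J_R(M)\iff J_{R^*}(M^* )=M$; and (ii) for all $M,M'\in\mathcal S$: $M\le M'\iff J_R(M)\ge J_R(M')$. *)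

From Stdlib Require Fin.
From Stdlib Require Import Reals List Classical ClassicalEpsilon.
Open Scope R_scope.

Definition vec (N : nat) := Fin.t N -> R.
Definition vset (N : nat) := vec N -> Prop.

Fixpoint dot (N : nat) : vec N -> vec N -> R :=
  match N return vec N -> vec N -> R with
  | O => fun _ _ => 0
  | S n => fun x y => x Fin.F1 * y Fin.F1
                      + dot n (fun i => x (Fin.FS i)) (fun i => y (Fin.FS i))
  end.
Arguments dot {N} _ _.

Definition vzero {N} : vec N := fun _ => 0.
Definition vadd {N} (x y : vec N) : vec N := fun i => x i + y i.
Definition vsub {N} (x y : vec N) : vec N := fun i => x i - y i.
Definition vscale {N} (c : R) (x : vec N) : vec N := fun i => c * x i.
Definition vnorm {N} (x : vec N) : R := sqrt (dot x x).

Definition closure {N} (S : vset N) : vset N :=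
  fun x => forall eps, 0 < eps -> exists y, S y /\ vnorm (vsub y x) < eps.

Definition sumR (l : list R) : R := fold_right Rplus 0 l.
Definition lincomb {N} (l : list (R * vec N)) : vec N :=
  fold_right (fun p acc => vadd (vscale (fst p) (snd p)) acc) vzero l.

Definition aff {N} (S : vset N) : vset N :=
  fun x => exists l : list (R * vec N),
    (forall p, In p l -> S (snd p)) /\ sumR (map fst l) = 1 /\ x = lincomb l.

Definition ri {N} (S : vset N) : vset N :=
  fun x => S x /\ exists eps, 0 < eps /\
    forall y, aff S y -> vnorm (vsub y x) < eps -> S y.

Definition msum {N} (A B : vset N) : vset N :=
  fun z => exists x y, A x /\ B y /\ z = vadd x y.

Definition lincomb_idx {N} (lam : nat -> R) (a : nat -> vec N) (l : list nat) : vec N :=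
  fold_right (fun i acc => vadd (vscale (lam i) (a i)) acc) vzero l.

Definition conv_fam {N} (P : nat -> Prop) (a : nat -> vec N) : vset N :=
  fun y => exists (l : list nat) (lam : nat -> R),
    (forall i, In i l -> P i) /\ (forall i, 0 <= lam i) /\
    sumR (map lam l) = 1 /\ y = lincomb_idx lam a l.

(** cone {a_i : P i} (convex conic hull; cone of the empty family is {0}) *)
Definition cone_fam {N} (P : nat -> Prop) (a : nat -> vec N) : vset N :=
  fun y => exists (l : list nat) (lam : nat -> R),
    (forall i, In i l -> P i) /\ (forall i, 0 <= lam i) /\
    y = lincomb_idx lam a l.

Inductive ereal := Fin (r : R) | PInf.

(** supremum in R ∪ {+oo} of a set of reals (+oo if unbounded;
    only used on nonempty sets) *)
Definition esup (P : R -> Prop) : ereal :=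
  match excluded_middle_informative (bound P /\ exists t, P t) with
  | left h => Fin (proj1_sig (completeness P (proj1 h) (proj2 h)))
  | right _ => PInf
  end.

Definition edom {N} (f : vec N -> ereal) : vset N := fun x => exists r, f x = Fin r.

Definition conjugate {N} (f : vec N -> ereal) : vec N -> ereal :=
  fun g => esup (fun t => exists x r, f x = Fin r /\ t = dot g x - r).

Definition subdiff {N} (f : vec N -> ereal) (x : vec N) : vset N :=
  fun g => exists fx, f x = Fin fx /\
    forall y fy, f y = Fin fy -> fx + dot g (vsub y x) <= fy.

Definition dom_subdiff {N} (f : vec N -> ereal) : vset N :=
  fun x => exists g, subdiff f x g.

Definition Jmap {N} (f : vec N -> ereal) (S : vset N) : vset N :=
  fun y => exists x, S x /\ ri (subdiff f x) y.

Definition stratification {N} (D : vset N) (S : vset N -> Prop) : Prop :=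
  (exists L : list (vset N), forall M, S M <-> In M L) /\
  (forall M, S M -> exists x, M x) /\
  (forall M, S M -> forall x, M x -> D x) /\
  (forall x, D x -> exists M, S M /\ M x) /\
  (forall M M', S M -> S M' -> M <> M' -> forall x, ~ (M x /\ M' x)) /\
  (forall M M', S M -> S M' ->
     (exists x, M x /\ closure M' x) -> forall x, M x -> closure M' x).

Definition strat_le {N} (M M' : vset N) : Prop := forall x, M x -> closure M' x.

Definition mirror_stratifiable {N} (f : vec N -> ereal)
    (S Sst : vset N -> Prop) : Prop :=
  stratification (dom_subdiff f) S /\
  stratification (dom_subdiff (conjugate f)) Sst /\
  (forall M, S M -> Sst (Jmap f M)) /\
  (forall Mst, Sst Mst -> S (Jmap (conjugate f) Mst)) /\
  (forall M Mst, S M -> Sst Mst ->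
     (Mst = Jmap f M <-> Jmap (conjugate f) Mst = M)) /\
  (forall M M', S M -> S M' ->
     (strat_le M M' <-> strat_le (Jmap f M') (Jmap f M))).

Fixpoint rmax_range (f : nat -> R) (k : nat) : R :=
  match k with
  | O => f 1%nat
  | S O => f 1%nat
  | S k' => Rmax (rmax_range f k') (f k)
  end.

Definition poly_feas {N} (k m : nat) (a : nat -> vec N) (alpha : nat -> R)
    (x : vec N) : Prop :=
  forall i, (k + 1 <= i <= m)%nat -> dot (a i) x - alpha i <= 0.

Definition polyR {N} (k m : nat) (a : nat -> vec N) (alpha : nat -> R)
    (x : vec N) : ereal :=
  match excluded_middle_informative (poly_feas k m a alpha x) with
  | left _ => Fin (rmax_range (fun i => dot (a i) x - alpha i) k)
  | right _ => PInf
  end.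

Definition Imax {N} k m (a : nat -> vec N) alpha (x : vec N) (i : nat) : Prop :=
  (1 <= i <= k)%nat /\ polyR k m a alpha x = Fin (dot (a i) x - alpha i).

Definition Ifeas {N} (k m : nat) (a : nat -> vec N) (alpha : nat -> R)
    (x : vec N) (i : nat) : Prop :=
  (k + 1 <= i <= m)%nat /\ dot (a i) x = alpha i.

Definition M_I {N} k m (a : nat -> vec N) alpha (I : nat -> Prop) : vset N :=
  fun x => edom (polyR k m a alpha) x /\
    forall i, I i <-> (Imax k m a alpha x i \/ Ifeas k m a alpha x i).

Definition Mst_I {N} (k m : nat) (a : nat -> vec N) (I : nat -> Prop) : vset N :=
  msum (ri (conv_fam (fun i => I i /\ (1 <= i <= k)%nat) a))
       (ri (cone_fam (fun i => I i /\ (k + 1 <= i <= m)%nat) a)).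

(* Write R = max_i l_i + indicator of P, with l_i = <a_i,.> - alpha_i, and let active(x) be
   I^max(x) U I^feas(x).  By Farkas' lemma the subdifferential at x is
   conv {a_i | i in I^max(x)} + cone {a_i | i in I^feas(x)}; its relative interior consists of
   the combinations with strictly positive weights, which is M*_{active(x)}, so J_R(M_I) = M*_I
   and the closure of M*_I is the subdifferential.
   Conversely, if g is in M*_I with positive weights, then R - <g,.> is a constant plus a
   nonnegative "gap" vanishing exactly on the face F_I = {x in dom R | I <= active(x)}; hence
   the subdifferential of R^* at g is F_I, whose relative interior is M_I and which is the closure
   of M_I.  Both the frontier condition and the order reversal follow from these closures.
   That the M*_I cover the domain of the subdifferential of R^* is strict complementarity:
   among the points having g as a subgradient pick one with fewest active indices; a zero
   weight on an active index would, by a Farkas alternative, give a direction leaving that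
   index inactive while keeping g a subgradient. *)

From Stdlib Require Import Reals List Lra Lia FunctionalExtensionality PropExtensionality Classical ClassicalEpsilon.
Open Scope R_scope.

(** * Euclidean geometry of [vec N] *)

Lemma vec_ext {N} (x y : vec N) : (forall i, x i = y i) -> x = y.
Proof. intros; apply functional_extensionality; auto. Qed.

Lemma dot_comm {N} (x y : vec N) : dot x y = dot y x.
Proof. induction N; simpl; [lra|]. rewrite IHN; lra. Qed.

Lemma dot_addl {N} (x y z : vec N) : dot (vadd x y) z = dot x z + dot y z.
Proof. induction N; simpl; [lra|].
  specialize (IHN (fun i => x (Fin.FS i)) (fun i => y (Fin.FS i)) (fun i => z (Fin.FS i))).
  unfold vadd in *. rewrite IHN. lra. Qed.

Lemma dot_scalel {N} c (x z : vec N) : dot (vscale c x) z = c * dot x z.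
Proof. induction N; simpl; [lra|].
  specialize (IHN (fun i => x (Fin.FS i)) (fun i => z (Fin.FS i))).
  unfold vscale in *. rewrite IHN. lra. Qed.

Lemma dot_subl {N} (x y z : vec N) : dot (vsub x y) z = dot x z - dot y z.
Proof. induction N; simpl; [lra|].
  specialize (IHN (fun i => x (Fin.FS i)) (fun i => y (Fin.FS i)) (fun i => z (Fin.FS i))).
  unfold vsub in *. rewrite IHN. lra. Qed.

Lemma dot_zerol {N} (z : vec N) : dot vzero z = 0.
Proof. induction N; simpl; [lra|].
  specialize (IHN (fun i => z (Fin.FS i))). unfold vzero in *. rewrite IHN. lra. Qed.

Lemma dot_addr {N} (x y z : vec N) : dot z (vadd x y) = dot z x + dot z y.
Proof. rewrite !(dot_comm z). apply dot_addl. Qed.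

Lemma dot_scaler {N} c (x z : vec N) : dot z (vscale c x) = c * dot z x.
Proof. rewrite !(dot_comm z). apply dot_scalel. Qed.

Lemma dot_subr {N} (x y z : vec N) : dot z (vsub x y) = dot z x - dot z y.
Proof. rewrite !(dot_comm z). apply dot_subl. Qed.

Lemma dot_zeror {N} (z : vec N) : dot z vzero = 0.
Proof. rewrite dot_comm. apply dot_zerol. Qed.

Lemma dot_pos {N} (x : vec N) : 0 <= dot x x.
Proof. induction N; simpl; [lra|].
  specialize (IHN (fun i => x (Fin.FS i))). nra. Qed.

Lemma dot_zero_coord {N} (x : vec N) : dot x x = 0 -> forall i, x i = 0.
Proof. induction N; intros H i.
  - inversion i.
  - simpl in H. pose proof (dot_pos (fun i => x (Fin.FS i))).
    assert (x Fin.F1 = 0) by nra.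
    assert (dot (fun i => x (Fin.FS i)) (fun i => x (Fin.FS i)) = 0) by nra.
    pattern i; apply (Fin.caseS' i); auto.
    intro q. apply (IHN (fun i => x (Fin.FS i))); auto. Qed.

Lemma dot_zero_vec {N} (x : vec N) : dot x x = 0 -> x = vzero.
Proof. intro H; apply vec_ext; intro i; apply dot_zero_coord; auto. Qed.

Lemma dot_pos_strict {N} (x : vec N) : x <> vzero -> 0 < dot x x.
Proof. intro H. destruct (dot_pos x) as [h|h]; auto.
  exfalso; apply H, dot_zero_vec; auto. Qed.

Lemma cauchy_schwarz {N} (x y : vec N) : (dot x y)^2 <= dot x x * dot y y.
Proof.
  destruct (Req_dec (dot y y) 0) as [h|h].
  - apply dot_zero_vec in h. subst y. rewrite dot_zeror, dot_zerol. nra.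
  - pose proof (dot_pos y).
    set (s := dot x y / dot y y).
    pose proof (dot_pos (vsub x (vscale s y))).
    rewrite dot_subl, !dot_subr, !dot_scalel, !dot_scaler in H0.
    rewrite (dot_comm y x) in H0.
    unfold s in H0. field_simplify in H0; [|lra].
    assert (0 < dot y y) by lra.
    apply Rmult_le_compat_r with (r := dot y y) in H0; [|lra].
    field_simplify in H0; [|lra]. nra.
Qed.

Lemma vnorm_pos {N} (x : vec N) : 0 <= vnorm x.
Proof. apply sqrt_pos. Qed.

Lemma vnorm_sq {N} (x : vec N) : vnorm x * vnorm x = dot x x.
Proof. apply sqrt_sqrt, dot_pos. Qed.

Lemma dot_abs_le_norm {N} (x y : vec N) : Rabs (dot x y) <= vnorm x * vnorm y.
Proof.
  pose proof (cauchy_schwarz x y).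
  pose proof (vnorm_sq x). pose proof (vnorm_sq y).
  pose proof (vnorm_pos x). pose proof (vnorm_pos y).
  apply Rle_trans with (Rabs (vnorm x * vnorm y)).
  - apply Rsqr_le_abs_0. unfold Rsqr. simpl in H. nra.
  - rewrite Rabs_right by nra. lra.
Qed.

Lemma dot_le_norm {N} (x y : vec N) : dot x y <= vnorm x * vnorm y.
Proof. pose proof (dot_abs_le_norm x y). pose proof (Rle_abs (dot x y)). lra. Qed.

Lemma vnorm_triangle {N} (x y : vec N) : vnorm (vadd x y) <= vnorm x + vnorm y.
Proof.
  pose proof (vnorm_sq (vadd x y)). rewrite dot_addl, !dot_addr in H.
  rewrite (dot_comm y x) in H.
  pose proof (vnorm_sq x). pose proof (vnorm_sq y). pose proof (dot_le_norm x y).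
  pose proof (vnorm_pos x). pose proof (vnorm_pos y). pose proof (vnorm_pos (vadd x y)).
  nra.
Qed.

Lemma vnorm_scale {N} c (x : vec N) : vnorm (vscale c x) = Rabs c * vnorm x.
Proof.
  unfold vnorm. rewrite dot_scalel, dot_scaler.
  replace (c * (c * dot x x)) with (Rsqr c * dot x x) by (unfold Rsqr; ring).
  rewrite sqrt_mult by (auto using Rle_0_sqr, dot_pos).
  rewrite sqrt_Rsqr_abs. auto.
Qed.

Lemma dot_small {N} (a v : vec N) eps : vnorm v < eps -> Rabs (dot a v) <= vnorm a * eps.
Proof. intro h. pose proof (dot_abs_le_norm a v). pose proof (vnorm_pos a).
  assert (vnorm a * vnorm v <= vnorm a * eps) by (apply Rmult_le_compat_l; lra). lra. Qed.

Lemma vsub_line {N} (x : vec N) t (w : vec N) : vsub (vadd x (vscale t w)) x = vscale t w.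
Proof. apply vec_ext; intro; unfold vsub, vadd, vscale; ring. Qed.

Lemma pred_ext {A} (P Q : A -> Prop) : (forall x, P x <-> Q x) -> P = Q.
Proof. intro h. apply functional_extensionality; intro x. apply propositional_extensionality; auto. Qed.

(** * Finite lists and small steps *)

Definition inb (P : Prop) : bool := if excluded_middle_informative P then true else false.

Lemma inb_true P : inb P = true <-> P.
Proof. unfold inb; destruct excluded_middle_informative; split; auto; congruence. Qed.

Lemma inb_In_true (L : list nat) i : In i L -> inb (In i L) = true.
Proof. intro; apply inb_true; auto. Qed.

Lemma inb_In_false (L : list nat) i : ~ In i L -> inb (In i L) = false.
Proof. intro h. unfold inb; destruct excluded_middle_informative; [contradiction|reflexivity]. Qed.

Definition sel (I : nat -> Prop) (lo len : nat) : list nat := filter (fun i => inb (I i)) (seq lo len).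

Lemma sel_In I lo len i : In i (sel I lo len) <-> I i /\ (lo <= i < lo + len)%nat.
Proof. unfold sel. rewrite filter_In, in_seq, inb_true. tauto. Qed.

Lemma sel_NoDup I lo len : NoDup (sel I lo len).
Proof. unfold sel. apply NoDup_filter, seq_NoDup. Qed.

Lemma NoDup_map_inj (f : nat -> nat) L : (forall x y, f x = f y -> x = y) -> NoDup L -> NoDup (map f L).
Proof. intros hf hnd. induction hnd; simpl; constructor; auto.
  rewrite in_map_iff. intros [y [hy hy']]. apply hf in hy; subst; contradiction. Qed.

Lemma NoDup_app_disj (L1 L2 : list nat) : NoDup L1 -> NoDup L2 -> (forall i, In i L1 -> ~ In i L2) -> NoDup (L1 ++ L2).
Proof. induction 1 as [|x l hx hl IH]; simpl; intros h2 hd; [auto|]. constructor.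
  - rewrite in_app_iff. intros [h|h]; [contradiction|]. apply (hd x); simpl; auto.
  - apply IH; [auto|]. intros; apply hd; simpl; auto. Qed.

Lemma filter_len_le (p q : nat -> bool) (l : list nat) : (forall i, In i l -> p i = true -> q i = true) ->
  (length (filter p l) <= length (filter q l))%nat.
Proof. induction l as [|x l IH]; intro h; simpl; [lia|].
  assert (IH' := IH (fun i hi => h i (or_intror hi))).
  destruct (p x) eqn:e1; destruct (q x) eqn:e2; simpl; try lia.
  rewrite h in e2; [discriminate|left; auto|auto]. Qed.

Lemma filter_len_lt (p q : nat -> bool) (l : list nat) : (forall i, In i l -> p i = true -> q i = true) ->
  (exists j, In j l /\ p j = false /\ q j = true) -> (length (filter p l) < length (filter q l))%nat.
Proof. induction l as [|x l IH]; intros h [j [hj [e1 e2]]]; [destruct hj|]. simpl.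
  assert (hle := filter_len_le p q l (fun i hi => h i (or_intror hi))).
  destruct hj as [<-|hj].
  - rewrite e1, e2. simpl. lia.
  - assert (IH' := IH (fun i hi => h i (or_intror hi)) (ex_intro _ j (conj hj (conj e1 e2)))).
    destruct (p x) eqn:f1; destruct (q x) eqn:f2; simpl; try lia.
    rewrite h in f2; [discriminate|left; auto|auto]. Qed.

Fixpoint sublists (l : list nat) : list (list nat) :=
  match l with nil => nil :: nil | x :: l' => map (cons x) (sublists l') ++ sublists l' end.

Lemma filter_sublists (p : nat -> bool) l : In (filter p l) (sublists l).
Proof. induction l as [|x l IH]; simpl; auto. destruct (p x); apply in_or_app; [left; apply in_map|right]; auto. Qed.

Lemma finite_image {X Y} (B : list X) (P : X -> Prop) (F : X -> Y) :
  exists L, forall y, In y L <-> exists s, In s B /\ P s /\ y = F s.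
Proof. induction B as [|s B [L HL]].
  - exists nil. intros y; split; [intros []|intros [s [[] _]]].
  - destruct (classic (P s)) as [hp|hp].
    + exists (F s :: L). intro y. split.
      * intros [<-|h]. exists s; split; [left|]; auto. apply HL in h as [s' [h1 h2]]. exists s'; split; [right|]; auto.
      * intros [s' [[<-|h1] [h2 ->]]]. left; auto. right; apply HL; eauto.
    + exists L. intro y. split.
      * intro h. apply HL in h as [s' [h1 h2]]. exists s'; split; [right|]; auto.
      * intros [s' [[<-|h1] [h2 ->]]]. contradiction. apply HL; eauto. Qed.

Lemma nat_measure_min {X} (f : X -> nat) (P : X -> Prop) x0 :
  P x0 -> exists z, P z /\ forall z', P z' -> (f z <= f z')%nat.
Proof.
  intro h0.
  enough (H : forall n z, P z -> (f z <= n)%nat -> exists z, P z /\ forall z', P z' -> (f z <= f z')%nat)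
    by (apply (H (f x0) x0); auto).
  induction n as [|n IH]; intros z hz hn.
  - exists z. split; auto. intros; lia.
  - destruct (classic (exists z', P z' /\ (f z' < f z)%nat)) as [[z' [hz' hlt]]|hno].
    + apply (IH z'); auto. lia.
    + exists z. split; auto. intros z' hz'. apply Nat.nlt_ge. intro hlt. apply hno; eauto.
Qed.

Lemma list_min_pos (f : nat -> R) L : (forall i, In i L -> 0 < f i) -> exists d, 0 < d /\ forall i, In i L -> d <= f i.
Proof. induction L; intros H.
  - exists 1; split; [lra|]; intros; contradiction.
  - destruct IHL as [d [hd Hd]]; [intros; apply H; simpl; auto|].
    exists (Rmin d (f a)). split. apply Rmin_pos; auto. apply H; simpl; auto.
    intros i [<-|hi]. apply Rmin_r. pose proof (Rmin_l d (f a)). pose proof (Hd i hi). lra. Qed.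

Lemma small_step_all {A} (L : list A) (P : A -> R -> Prop) :
  (forall i, In i L -> exists d, 0 < d /\ forall t, 0 < t < d -> P i t) ->
  exists d, 0 < d /\ forall t, 0 < t < d -> forall i, In i L -> P i t.
Proof. induction L; intros H.
  - exists 1; split; [lra|]; intros; contradiction.
  - destruct IHL as [d1 [hd1 H1]]; [intros; apply H; simpl; auto|].
    destruct (H a (or_introl eq_refl)) as [d2 [hd2 H2]].
    exists (Rmin d1 d2); split; [apply Rmin_pos; auto|].
    intros t ht i [<-|hi].
    + apply H2. pose proof (Rmin_r d1 d2). lra.
    + apply H1; auto. pose proof (Rmin_l d1 d2). lra. Qed.

Lemma small_step_neg (A B : R) : A < 0 -> exists d, 0 < d /\ forall t, 0 < t < d -> A + t * B < 0.
Proof. intro h. destruct (Rle_dec B 0).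
  - exists 1; split; [lra|]. intros; nra.
  - exists (- A / B). split. apply Rdiv_lt_0_compat; lra.
    intros t [h1 h2]. apply Rmult_lt_compat_r with (r := B) in h2; [|lra].
    unfold Rdiv in h2. rewrite Rmult_assoc, Rinv_l in h2 by lra. lra. Qed.

Lemma small_step_norm v eps : 0 <= v -> 0 < eps -> eps / (2 * (v + 1)) * v < eps.
Proof. intros hv he.
  replace (eps / (2 * (v + 1)) * v) with (eps * (v / (2 * (v + 1)))) by (field; lra).
  assert (v / (2 * (v + 1)) < 1).
  { apply Rmult_lt_reg_r with (2 * (v + 1)); [lra|]. unfold Rdiv. rewrite Rmult_assoc, Rinv_l by lra. lra. }
  nra. Qed.

Lemma segment_near {N} (x c : vec N) eps : 0 < eps ->
  exists t, 0 < t <= 1 /\ vnorm (vsub (vadd x (vscale t (vsub c x))) x) < eps.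
Proof.
  intro heps. pose proof (vnorm_pos (vsub c x)).
  set (t := Rmin 1 (eps / (2 * (vnorm (vsub c x) + 1)))).
  assert (ht : 0 < t) by (unfold t; apply Rmin_pos; [lra|apply Rdiv_lt_0_compat; lra]).
  assert (ht2 : t <= eps / (2 * (vnorm (vsub c x) + 1))) by apply Rmin_r.
  exists t. split; [split; [auto|apply Rmin_l]|].
  rewrite vsub_line, vnorm_scale, Rabs_right by lra.
  pose proof (small_step_norm (vnorm (vsub c x)) eps H heps). nra.
Qed.

Lemma extension_near {N} (x c : vec N) eps : 0 < eps ->
  exists t, 0 < t /\ vnorm (vsub (vadd x (vscale t (vsub x c))) x) < eps.
Proof.
  intro heps. pose proof (vnorm_pos (vsub x c)).
  exists (eps / (2 * (vnorm (vsub x c) + 1))). split; [apply Rdiv_lt_0_compat; lra|].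
  rewrite vsub_line, vnorm_scale, Rabs_right by (left; apply Rdiv_lt_0_compat; lra).
  apply small_step_norm; auto.
Qed.

Lemma dot_lt_near {N} (c x : vec N) e : dot c x + e < 0 ->
  exists d, 0 < d /\ forall y, vnorm (vsub y x) < d -> dot c y + e < 0.
Proof. intro h. set (eta := - (dot c x + e)). exists (eta / (vnorm c + 1)).
  pose proof (vnorm_pos c). split; [apply Rdiv_lt_0_compat; unfold eta; lra|].
  intros y hy. pose proof (dot_small c (vsub y x) _ hy). rewrite dot_subr in H0.
  assert (vnorm c * (eta / (vnorm c + 1)) < eta).
  { unfold Rdiv. apply Rmult_lt_reg_r with (vnorm c + 1); [lra|].
    rewrite Rmult_assoc, Rmult_assoc, Rinv_l by lra. unfold eta; nra. }
  pose proof (Rle_abs (dot c y - dot c x)). unfold eta in *. lra. Qed.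

Lemma near_all {N A} (L : list A) (x : vec N) (Q : A -> vec N -> Prop) :
  (forall i, In i L -> exists d, 0 < d /\ forall y, vnorm (vsub y x) < d -> Q i y) ->
  exists d, 0 < d /\ forall y, vnorm (vsub y x) < d -> forall i, In i L -> Q i y.
Proof. intro H. destruct (small_step_all L (fun i t => forall y, vnorm (vsub y x) < t -> Q i y)) as [d [hd Hd]].
  - intros i hi. destruct (H i hi) as [d [hd Hd]]. exists d; split; auto. intros t ht y hy. apply Hd; lra.
  - exists (d / 2). split; [lra|]. intros y hy i hi. apply (Hd (d / 2)); auto; lra. Qed.

Lemma closure_dot_le {N} (S : vset N) (c x : vec N) e :
  closure S x -> (forall y, S y -> dot c y + e <= 0) -> dot c x + e <= 0.
Proof. intros hc hS. apply Rnot_lt_le. intro hlt.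
  destruct (dot_lt_near (vscale (-1) c) x (- e)) as [d [hd Hd]].
  { rewrite dot_scalel. lra. }
  destruct (hc d hd) as [y [hy hyx]]. specialize (Hd y hyx). rewrite dot_scalel in Hd. specialize (hS y hy). lra. Qed.

Lemma aff_two {N} (S : vset N) x c t : S x -> S c -> aff S (vadd x (vscale t (vsub x c))).
Proof. intros hx hc. exists ((1 + t, x) :: (-t, c) :: nil). split; [|split].
  - intros p [<-|[<-|[]]]; auto.
  - simpl. ring.
  - apply vec_ext; intro j. simpl. unfold vadd, vscale, vsub, vzero. ring. Qed.

Lemma aff_affine_gen {N} (S : vset N) (c : vec N) e (l : list (R * vec N)) :
  (forall w, S w -> dot c w + e = 0) -> (forall p, In p l -> S (snd p)) ->
  dot c (lincomb l) + e * sumR (map fst l) = 0.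
Proof. intros hS. induction l as [|[r w] l IH]; intro hl.
  - simpl. rewrite dot_zeror. ring.
  - change (dot c (vadd (vscale r w) (lincomb l)) + e * (r + sumR (map fst l)) = 0).
    rewrite dot_addr, dot_scaler. pose proof (hS w (hl (r, w) (or_introl eq_refl))).
    pose proof (IH (fun p h => hl p (or_intror h))). simpl in H. nra. Qed.

Lemma aff_affine {N} (S : vset N) (c : vec N) e y :
  (forall w, S w -> dot c w + e = 0) -> aff S y -> dot c y + e = 0.
Proof. intros hS [l [hl [hs ->]]]. pose proof (aff_affine_gen S c e l hS hl). rewrite hs in H. lra. Qed.

(** * Finite sums and linear combinations *)

Definition wsum (lam F : nat -> R) (L : list nat) : R := sumR (map (fun i => lam i * F i) L).

Lemma sumR_app l1 l2 : sumR (l1 ++ l2) = sumR l1 + sumR l2.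
Proof. induction l1; simpl; lra. Qed.

Lemma sumR_map_ext {A} (f g : A -> R) (L : list A) :
  (forall i, In i L -> f i = g i) -> sumR (map f L) = sumR (map g L).
Proof. induction L; simpl; intros; auto. rewrite H, IHL; auto. Qed.

Lemma sumR_map_le {A} (f g : A -> R) (L : list A) :
  (forall i, In i L -> f i <= g i) -> sumR (map f L) <= sumR (map g L).
Proof. induction L; simpl; intros; [lra|]. pose proof (H a (or_introl eq_refl)).
  pose proof (IHL (fun i h => H i (or_intror h))). lra. Qed.

Lemma sumR_map_lt {A} (f g : A -> R) (L : list A) :
  (forall i, In i L -> f i <= g i) -> (exists i, In i L /\ f i < g i) ->
  sumR (map f L) < sumR (map g L).
Proof. induction L; simpl; intros H [i [hi hlt]]; [contradiction|].
  destruct hi as [<-|hi].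
  - pose proof (sumR_map_le f g L (fun i h => H i (or_intror h))). lra.
  - pose proof (H a (or_introl eq_refl)).
    assert (sumR (map f L) < sumR (map g L)) by (apply IHL; eauto). lra. Qed.

Lemma sumR_map_add {A} (f g : A -> R) (L : list A) :
  sumR (map (fun i => f i + g i) L) = sumR (map f L) + sumR (map g L).
Proof. induction L; simpl; lra. Qed.

Lemma sumR_map_scal {A} c (f : A -> R) (L : list A) :
  sumR (map (fun i => c * f i) L) = c * sumR (map f L).
Proof. induction L; simpl; lra. Qed.

Lemma sumR_map_zero {A} (L : list A) : sumR (map (fun _ => 0) L) = 0.
Proof. induction L; simpl; lra. Qed.

Lemma sumR_map_nonneg {A} (f : A -> R) L : (forall i, In i L -> 0 <= f i) -> 0 <= sumR (map f L).
Proof. intro. rewrite <- (sumR_map_zero L). apply sumR_map_le. auto. Qed.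

Lemma sumR_map_const {A} c (L : list A) : sumR (map (fun _ => c) L) = c * INR (length L).
Proof. induction L; simpl length; simpl map; simpl sumR.
  - simpl; ring. - rewrite IHL, S_INR. ring. Qed.

Lemma sumR_map_single (f : nat -> R) L i0 : NoDup L -> In i0 L ->
  sumR (map (fun i => if Nat.eq_dec i i0 then f i else 0) L) = f i0.
Proof. induction L; simpl; intros hnd hin; [contradiction|]. inversion hnd; subst.
  destruct (Nat.eq_dec a i0).
  - subst. rewrite (sumR_map_ext _ (fun _ => 0)). rewrite sumR_map_zero; ring.
    intros i hi. destruct (Nat.eq_dec i i0); auto. subst; contradiction.
  - destruct hin; [congruence|]. rewrite IHL; auto. ring. Qed.

Lemma sumR_lin2 c (f g : nat -> R) L : sumR (map (fun i => c * f i + g i) L) = c * sumR (map f L) + sumR (map g L).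
Proof. induction L; simpl; [ring|]. rewrite IHL. ring. Qed.

Lemma wsum_ext lam lam' F F' L : (forall i, In i L -> lam i * F i = lam' i * F' i) ->
  wsum lam F L = wsum lam' F' L.
Proof. intro; unfold wsum; apply sumR_map_ext; auto. Qed.

Lemma wsum_app lam F L1 L2 : wsum lam F (L1 ++ L2) = wsum lam F L1 + wsum lam F L2.
Proof. unfold wsum; rewrite map_app, sumR_app; auto. Qed.

Lemma wsum_sub l F G L : wsum l (fun i => F i - G i) L = wsum l F L - wsum l G L.
Proof. unfold wsum. induction L; simpl; [ring|]. rewrite IHL; ring. Qed.

Lemma wsum_const l c L : wsum l (fun _ => c) L = c * sumR (map l L).
Proof. unfold wsum. induction L; simpl; [ring|]. rewrite IHL; ring. Qed.

Lemma wsum_nonneg l F L : (forall i, 0 <= l i) -> (forall i, In i L -> 0 <= F i) -> 0 <= wsum l F L.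
Proof. intros h1 h2. unfold wsum. apply sumR_map_nonneg. intros i hi. apply Rmult_le_pos; auto. Qed.

Lemma wsum_zero_pos l F L : (forall i, In i L -> 0 < l i) -> (forall i, In i L -> 0 <= F i) ->
  wsum l F L <= 0 -> forall i, In i L -> F i = 0.
Proof. intros h1 h2 h3 i hi. destruct (h2 i hi) as [hp|]; auto. exfalso.
  assert (0 < wsum l F L).
  { unfold wsum. rewrite <- (sumR_map_zero L). apply sumR_map_lt.
    - intros j hj. apply Rmult_le_pos; [left|]; auto.
    - exists i. split; auto. apply Rmult_lt_0_compat; auto. }
  lra. Qed.

Lemma wsum_zero_all l F L : (forall i, In i L -> F i = 0) -> wsum l F L = 0.
Proof. intro h. unfold wsum. rewrite (sumR_map_ext _ (fun _ => 0)). apply sumR_map_zero.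
  intros i hi. rewrite h; auto; ring. Qed.

Lemma wsum_scale_add s f g F L : wsum (fun i => s * (f i + g i)) F L = s * (wsum f F L + wsum g F L).
Proof. unfold wsum. induction L; simpl; [ring|]. rewrite IHL; ring. Qed.

Lemma wsum_scale_add3 s f g h F L : wsum (fun i => s * (f i + g i + h i)) F L = s * (wsum f F L + wsum g F L + wsum h F L).
Proof. unfold wsum. induction L; simpl; [ring|]. rewrite IHL; ring. Qed.

Lemma wsum_delta F L j : NoDup L -> In j L -> wsum (fun i => if Nat.eq_dec i j then 1 else 0) F L = F j.
Proof. intros hnd hj. unfold wsum. rewrite <- (sumR_map_single F L j hnd hj). apply sumR_map_ext.
  intros i _. destruct Nat.eq_dec; ring. Qed.

Lemma lincomb_coord {N} lam (a : nat -> vec N) L j :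
  lincomb_idx lam a L j = wsum lam (fun i => a i j) L.
Proof. induction L; simpl; unfold wsum in *; simpl; auto.
  unfold vadd, vscale. rewrite <- IHL. reflexivity. Qed.

Lemma lincomb_dot {N} lam (a : nat -> vec N) L d :
  dot (lincomb_idx lam a L) d = wsum lam (fun i => dot (a i) d) L.
Proof. induction L; unfold wsum in *; simpl.
  - apply dot_zerol.
  - rewrite dot_addl, dot_scalel, IHL. reflexivity. Qed.

Lemma lincomb_ext {N} lam lam' (a : nat -> vec N) L :
  (forall i, In i L -> lam i = lam' i) -> lincomb_idx lam a L = lincomb_idx lam' a L.
Proof. intro H. apply vec_ext; intro j. rewrite !lincomb_coord. unfold wsum.
  apply sumR_map_ext. intros; rewrite H; auto. Qed.

Lemma lincomb_ext_fam {N} lam (a a' : nat -> vec N) L :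
  (forall i, In i L -> a i = a' i) -> lincomb_idx lam a L = lincomb_idx lam a' L.
Proof. intro H. apply vec_ext; intro j. rewrite !lincomb_coord. unfold wsum.
  apply sumR_map_ext. intros; rewrite H; auto. Qed.

Lemma lincomb_app {N} lam (a : nat -> vec N) L1 L2 :
  lincomb_idx lam a (L1 ++ L2) = vadd (lincomb_idx lam a L1) (lincomb_idx lam a L2).
Proof. apply vec_ext; intro j. unfold vadd. rewrite !lincomb_coord. apply wsum_app. Qed.

Lemma lincomb_lin {N} (f g : nat -> R) c (a : nat -> vec N) L :
  lincomb_idx (fun i => c * f i + g i) a L = vadd (vscale c (lincomb_idx f a L)) (lincomb_idx g a L).
Proof. apply vec_ext; intro j. unfold vadd, vscale. rewrite !lincomb_coord. unfold wsum.
  rewrite <- sumR_map_scal, <- sumR_map_add. apply sumR_map_ext; intros; ring. Qed.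

Lemma lincomb_scale {N} c lam (a : nat -> vec N) L :
  lincomb_idx (fun i => c * lam i) a L = vscale c (lincomb_idx lam a L).
Proof. apply vec_ext; intro j. unfold vscale. rewrite !lincomb_coord. unfold wsum.
  rewrite <- sumR_map_scal. apply sumR_map_ext. intros; ring. Qed.

Lemma lincomb_neg {N} f (a : nat -> vec N) L : lincomb_idx (fun i => - f i) a L = vscale (-1) (lincomb_idx f a L).
Proof. apply vec_ext; intro j. unfold vscale. rewrite !lincomb_coord. unfold wsum.
  rewrite <- sumR_map_scal. apply sumR_map_ext. intros; ring. Qed.

Lemma lincomb_map {N} lam (a : nat -> vec N) f L :
  lincomb_idx lam a (map f L) = lincomb_idx (fun i => lam (f i)) (fun i => a (f i)) L.
Proof. induction L; simpl; auto. rewrite IHL; auto. Qed.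

Lemma lincomb_project {N} lam (b : nat -> vec N) L (v d : vec N) beta :
  lincomb_idx lam (fun i => vsub (b i) (vscale (dot (b i) d / beta) v)) L =
  vsub (lincomb_idx lam b L) (vscale (wsum lam (fun i => dot (b i) d) L / beta) v).
Proof.
  apply vec_ext; intro j. unfold vsub, vscale. rewrite !lincomb_coord. unfold wsum, Rdiv.
  induction L as [|i L IH]; simpl; [ring|]. rewrite IH. ring.
Qed.

Lemma lincomb_cons_upd {N} (b : nat -> vec N) L i0 nu c : ~ In i0 L ->
  lincomb_idx (fun i => if Nat.eq_dec i i0 then c else nu i) b (i0 :: L) =
  vadd (vscale c (b i0)) (lincomb_idx nu b L).
Proof.
  intro hni. simpl. destruct Nat.eq_dec; [|congruence]. f_equal. apply lincomb_ext.
  intros i hi. destruct Nat.eq_dec; auto. subst; contradiction.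
Qed.

Lemma dot_lincomb_orth {N} nu (b : nat -> vec N) L d :
  (forall i, In i L -> dot (b i) d = 0) -> dot (lincomb_idx nu b L) d = 0.
Proof.
  intro h. rewrite lincomb_dot. unfold wsum. rewrite (sumR_map_ext _ (fun _ => 0)).
  - apply sumR_map_zero.
  - intros i hi. rewrite h; auto; ring.
Qed.

Lemma lincomb_collapse {N} (a : nat -> vec N) L : NoDup L -> forall l lam, (forall i, In i l -> In i L) ->
  (forall i, 0 <= lam i) -> exists lam', (forall i, 0 <= lam' i) /\
    sumR (map lam' L) = sumR (map lam l) /\ lincomb_idx lam' a L = lincomb_idx lam a l.
Proof.
  intros hnd l lam hin hl. induction l as [|i0 l IH].
  - exists (fun _ => 0). split; [intros; lra|]. split.
    + simpl. apply sumR_map_zero.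
    + apply vec_ext; intro j. rewrite lincomb_coord. unfold wsum.
      rewrite (sumR_map_ext _ (fun _ => 0)) by (intros; ring). rewrite sumR_map_zero. reflexivity.
  - destruct IH as [lam' [h1 [h2 h3]]]; [intros; apply hin; simpl; auto|].
    assert (hi0 : In i0 L) by (apply hin; simpl; auto).
    exists (fun i => lam' i + (if Nat.eq_dec i i0 then lam i0 else 0)). split; [|split].
    + intro i. destruct Nat.eq_dec; specialize (h1 i); specialize (hl i0); lra.
    + rewrite sumR_map_add, h2. rewrite (sumR_map_single (fun _ => lam i0)) by auto. simpl. ring.
    + apply vec_ext; intro j. simpl. unfold vadd, vscale. rewrite <- h3.
      rewrite !lincomb_coord. unfold wsum.
      rewrite (sumR_map_ext _ (fun i => lam' i * a i j + (if Nat.eq_dec i i0 then lam i0 * a i j else 0))).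
      2:{ intros i _. destruct Nat.eq_dec; ring. }
      rewrite sumR_map_add. rewrite (sumR_map_single (fun i => lam i0 * a i j)) by auto. ring.
Qed.

Lemma farkas {N} (L : list nat) : NoDup L -> forall (b : nat -> vec N) (g : vec N),
 (exists lam, (forall i, 0 <= lam i) /\ g = lincomb_idx lam b L) \/
 (exists d, (forall i, In i L -> dot (b i) d <= 0) /\ 0 < dot g d).
Proof.
  induction L as [|i0 L IH]; intros hnd b g.
  - destruct (classic (g = vzero)) as [h|h].
    + left. exists (fun _ => 0). split; [intros; lra|]. rewrite h. reflexivity.
    + right. exists g. split; [intros; contradiction|]. apply dot_pos_strict; auto.
  - inversion hnd as [|? ? hni hnd']; subst.
    destruct (IH hnd' b g) as [[lam [hl hg]]|[d [hd hgd]]].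
    { left. exists (fun i => if Nat.eq_dec i i0 then 0 else lam i). split.
      - intros i; destruct Nat.eq_dec; auto; lra.
      - rewrite lincomb_cons_upd, <- hg by auto. apply vec_ext; intro j; unfold vadd, vscale; ring. }
    destruct (Rle_dec (dot (b i0) d) 0) as [hb|hb].
    { right. exists d. split; auto. intros i [<-|hi]; auto. }
    (* Otherwise project everything along [b i0] onto the hyperplane orthogonal to [d]. *)
    set (beta := dot (b i0) d). assert (hbeta : 0 < beta) by (unfold beta; lra).
    set (b' := fun i => vsub (b i) (vscale (dot (b i) d / beta) (b i0))).
    set (g' := vsub g (vscale (dot g d / beta) (b i0))).
    destruct (IH hnd' b' g') as [[lam [hl hg]]|[d' [hd' hgd']]].
    + left. set (W := wsum lam (fun i => dot (b i) d) L).
      assert (hW : W <= 0).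
      { unfold W, wsum. rewrite <- (sumR_map_zero L). apply sumR_map_le.
        intros i hi. specialize (hd i hi). specialize (hl i). nra. }
      exists (fun i => if Nat.eq_dec i i0 then (dot g d - W) / beta else lam i). split.
      * intro i; destruct Nat.eq_dec; auto. unfold Rdiv; apply Rmult_le_pos; [lra|left; apply Rinv_0_lt_compat; lra].
      * rewrite lincomb_cons_upd by auto. unfold g', b' in hg. rewrite lincomb_project in hg. fold W in hg.
        apply vec_ext; intro j. assert (hj := f_equal (fun v => v j) hg). cbv beta in hj.
        unfold vsub, vadd, vscale in *.
        replace ((dot g d - W) / beta * b i0 j) with (dot g d / beta * b i0 j - W / beta * b i0 j)
          by (unfold Rdiv; ring). lra.
    + right. exists (vsub d' (vscale (dot (b i0) d' / beta) d)). split.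
      * intros i [<-|hi].
        -- rewrite dot_subr, dot_scaler. fold beta. field_simplify; lra.
        -- specialize (hd' i hi). unfold b' in hd'. rewrite dot_subl, dot_scalel in hd'.
           rewrite dot_subr, dot_scaler.
           replace (dot (b i0) d' / beta * dot (b i) d) with (dot (b i) d / beta * dot (b i0) d')
             by (field; lra). lra.
      * unfold g' in hgd'. rewrite dot_subl, dot_scalel in hgd'. rewrite dot_subr, dot_scaler.
        replace (dot (b i0) d' / beta * dot g d) with (dot g d / beta * dot (b i0) d') by (field; lra).
        lra.
Qed.

Definition vopp {N} (x : vec N) : vec N := vscale (-1) x.

(* Index [3 i] carries [b i], [3 i + 1] carries [bf i] and [3 i + 2] carries [- bf i], so a
   free coefficient on [bf i] becomes a difference of two nonnegative ones. *)
Definition mixed_fam {N} (b bf : nat -> vec N) (n : nat) : vec N :=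
  if Nat.eq_dec (n mod 3) 0 then b (n / 3)%nat
  else if Nat.eq_dec (n mod 3) 1 then bf (n / 3)%nat else vopp (bf (n / 3)%nat).

Lemma div3 i r : (r < 3)%nat -> ((3 * i + r) / 3 = i /\ (3 * i + r) mod 3 = r)%nat.
Proof. intros. split.
  - rewrite Nat.mul_comm, Nat.div_add_l by lia. rewrite Nat.div_small by lia. lia.
  - rewrite Nat.mul_comm, Nat.add_comm, Nat.Div0.mod_add. apply Nat.mod_small; lia. Qed.

Lemma mixed_fam_0 {N} (b bf : nat -> vec N) i : mixed_fam b bf (3 * i) = b i.
Proof. unfold mixed_fam. destruct (div3 i 0) as [h1 h2]; [lia|]. rewrite Nat.add_0_r in *.
  rewrite h1, h2. reflexivity. Qed.

Lemma mixed_fam_1 {N} (b bf : nat -> vec N) i : mixed_fam b bf (3 * i + 1) = bf i.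
Proof. unfold mixed_fam. destruct (div3 i 1) as [h1 h2]; [lia|]. rewrite h1, h2. reflexivity. Qed.

Lemma mixed_fam_2 {N} (b bf : nat -> vec N) i : mixed_fam b bf (3 * i + 2) = vopp (bf i).
Proof. unfold mixed_fam. destruct (div3 i 2) as [h1 h2]; [lia|]. rewrite h1, h2. reflexivity. Qed.

Lemma farkas_mixed {N} (L Lf : list nat) (b bf : nat -> vec N) (g : vec N) : NoDup L -> NoDup Lf ->
 (exists lam nu, (forall i, 0 <= lam i) /\ g = vadd (lincomb_idx lam b L) (lincomb_idx nu bf Lf)) \/
 (exists d, (forall i, In i L -> dot (b i) d <= 0) /\ (forall i, In i Lf -> dot (bf i) d = 0) /\ 0 < dot g d).
Proof.
  intros h1 h2.
  set (LL := map (fun i => 3 * i)%nat L ++ map (fun i => 3 * i + 1)%nat Lf ++ map (fun i => 3 * i + 2)%nat Lf).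
  assert (hnd : NoDup LL).
  { unfold LL. apply NoDup_app_disj; [|apply NoDup_app_disj|].
    - apply NoDup_map_inj; auto; intros; lia.
    - apply NoDup_map_inj; auto; intros; lia.
    - apply NoDup_map_inj; auto; intros; lia.
    - intros i hi hi'. rewrite in_map_iff in *. destruct hi as [x [<- _]], hi' as [y [hy _]]; lia.
    - intros i hi hi'. rewrite in_app_iff, !in_map_iff in *.
      destruct hi as [x [<- _]]. destruct hi' as [[y [hy _]]|[y [hy _]]]; lia. }
  destruct (farkas LL hnd (mixed_fam b bf) g) as [[lam [hl hg]]|[d [hd hgd]]].
  - left. exists (fun i => lam (3 * i)%nat), (fun i => lam (3 * i + 1)%nat - lam (3 * i + 2)%nat).
    split; auto. rewrite hg. unfold LL. rewrite !lincomb_app, !lincomb_map.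
    rewrite (lincomb_ext_fam _ (fun i => mixed_fam b bf (3 * i)) b) by (intros; apply mixed_fam_0).
    rewrite (lincomb_ext_fam _ (fun i => mixed_fam b bf (3 * i + 1)) bf) by (intros; apply mixed_fam_1).
    rewrite (lincomb_ext_fam _ (fun i => mixed_fam b bf (3 * i + 2)) (fun i => vopp (bf i))) by (intros; apply mixed_fam_2).
    apply vec_ext; intro j. unfold vadd. rewrite !lincomb_coord. unfold vopp, vscale, wsum.
    f_equal. rewrite <- sumR_map_add. apply sumR_map_ext. intros; ring.
  - right. exists d. unfold LL in hd. split; [|split]; auto.
    + intros i hi. rewrite <- (mixed_fam_0 b bf). apply hd.
      apply in_app_iff; left. apply (in_map (fun i => (3 * i)%nat)); auto.
    + intros i hi. 
      assert (dot (mixed_fam b bf (3 * i + 1)) d <= 0)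
        by (apply hd; rewrite !in_app_iff; right; left; apply (in_map (fun i => (3 * i + _)%nat)); auto).
      assert (dot (mixed_fam b bf (3 * i + 2)) d <= 0)
        by (apply hd; rewrite !in_app_iff; right; right; apply (in_map (fun i => (3 * i + _)%nat)); auto).
      rewrite mixed_fam_1 in H. rewrite mixed_fam_2 in H0. unfold vopp in H0. rewrite dot_scalel in H0. lra.
Qed.

Lemma farkas_span {N} (L : list nat) (b : nat -> vec N) g : NoDup L ->
  ~ (exists nu, g = lincomb_idx nu b L) ->
  exists d, (forall i, In i L -> dot (b i) d = 0) /\ 0 < dot g d.
Proof. intros hnd hn.
  destruct (farkas_mixed nil L b b g (NoDup_nil _) hnd) as [[lam [nu [_ hg]]]|[d [_ [h1 h2]]]].
  - exfalso; apply hn. exists nu. rewrite hg. apply vec_ext; intro; unfold vadd; simpl; unfold vzero; ring.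
  - eauto. Qed.

Definition homog {N} (x : vec N) (s : R) : vec (S N) := fun i => Fin.caseS' i (fun _ => R) s x.

Lemma dot_homog {N} (x : vec N) s (d : vec (S N)) : dot (homog x s) d = s * d Fin.F1 + dot x (fun j => d (Fin.FS j)).
Proof. reflexivity. Qed.

Lemma homog_inj {N} (x y : vec N) s t : homog x s = homog y t -> x = y /\ s = t.
Proof. intro h. split.
  - apply vec_ext; intro j. exact (f_equal (fun v => v (Fin.FS j)) h).
  - exact (f_equal (fun v => v Fin.F1) h). Qed.

Lemma lincomb_homog {N} lam (a : nat -> vec N) (e : nat -> R) L :
  lincomb_idx lam (fun i => homog (a i) (e i)) L = homog (lincomb_idx lam a L) (wsum lam e L).
Proof. induction L; simpl.
  - apply vec_ext; intro i. pattern i; apply (Fin.caseS' i); reflexivity.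
  - rewrite IHL. apply vec_ext; intro i. pattern i; apply (Fin.caseS' i); reflexivity. Qed.

Lemma vnorm_homog0 {N} (w : vec N) : vnorm (homog w 0) = vnorm w.
Proof. unfold vnorm. f_equal. change (0 * 0 + dot w w = dot w w). ring. Qed.

Definition pcomb {N} (L1 L2 : list nat) (u v : nat -> vec N) : vset N :=
  fun z => exists lam mu, (forall i, 0 <= lam i) /\ (forall i, 0 <= mu i) /\
    sumR (map lam L1) = 1 /\ z = vadd (lincomb_idx lam u L1) (lincomb_idx mu v L2).

Definition spcomb {N} (L1 L2 : list nat) (u v : nat -> vec N) : vset N :=
  fun z => exists lam mu, (forall i, 0 <= lam i) /\ (forall i, 0 <= mu i) /\
    (forall i, In i L1 -> 0 < lam i) /\ (forall i, In i L2 -> 0 < mu i) /\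
    sumR (map lam L1) = 1 /\ z = vadd (lincomb_idx lam u L1) (lincomb_idx mu v L2).

Lemma spcomb_pcomb {N} L1 L2 (u v : nat -> vec N) z : spcomb L1 L2 u v z -> pcomb L1 L2 u v z.
Proof. intros (lam & mu & h1 & h2 & _ & _ & h3 & h4). exists lam, mu; auto. Qed.

(* Lifting [u i] to (1, u i) and [v i] to (0, v i) turns membership in [pcomb] into
   membership in a finitely generated cone of R^(1+N). *)
Definition homog_fam {N} (L1 : list nat) (u v : nat -> vec N) (i : nat) : vec (S N) :=
  if inb (In i L1) then homog (u i) 1 else homog (v i) 0.

Lemma homog_fam_in {N} L1 (u v : nat -> vec N) i : In i L1 -> homog_fam L1 u v i = homog (u i) 1.
Proof. intro h. unfold homog_fam. destruct (inb (In i L1)) eqn:e; auto. exfalso.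
  unfold inb in e; destruct excluded_middle_informative; congruence. Qed.

Lemma homog_fam_notin {N} L1 (u v : nat -> vec N) i : ~ In i L1 -> homog_fam L1 u v i = homog (v i) 0.
Proof. intro h. unfold homog_fam. destruct (inb (In i L1)) eqn:e; auto. exfalso.
  apply h. apply inb_true; auto. Qed.

Lemma lincomb_homog_fam {N} L1 L2 (u v : nat -> vec N) lam :
  (forall i, In i L1 -> ~ In i L2) ->
  lincomb_idx lam (homog_fam L1 u v) (L1 ++ L2) =
  homog (vadd (lincomb_idx lam u L1) (lincomb_idx lam v L2)) (sumR (map lam L1)).
Proof. intro hd. rewrite lincomb_app.
  rewrite (lincomb_ext_fam _ _ (fun i => homog (u i) 1) L1) by (intros; apply homog_fam_in; auto).
  rewrite (lincomb_ext_fam _ _ (fun i => homog (v i) 0) L2).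
  2:{ intros i hi. apply homog_fam_notin. intro h; apply (hd i); auto. }
  rewrite (lincomb_homog _ u (fun _ => 1)), (lincomb_homog _ v (fun _ => 0)).
  apply vec_ext; intro i. pattern i; apply (Fin.caseS' i).
  - change (wsum lam (fun _ : nat => 1) L1 + wsum lam (fun _ : nat => 0) L2 = sumR (map lam L1)).
    unfold wsum. rewrite (sumR_map_ext (fun i => lam i * 0) (fun i => 0)) by (intros; ring).
    rewrite sumR_map_zero. rewrite (sumR_map_ext _ lam) by (intros; ring). ring.
  - reflexivity. Qed.

Lemma farkas_pcomb {N} (L1 L2 : list nat) (a : nat -> vec N) g :
  NoDup L1 -> NoDup L2 -> (forall i, In i L1 -> ~ In i L2) ->
  pcomb L1 L2 a a g \/
  exists d, (forall i, In i L1 -> dot (a i) d < dot g d) /\ (forall i, In i L2 -> dot (a i) d <= 0).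
Proof.
  intros h1 h2 hd.
  destruct (farkas (L1 ++ L2) (NoDup_app_disj _ _ h1 h2 hd) (homog_fam L1 a a) (homog g 1))
    as [[lam [hl hg]]|[dh [hdh hg]]].
  - left. rewrite lincomb_homog_fam in hg by auto. apply homog_inj in hg as [hg1 hg2].
    exists lam, lam; repeat split; auto.
  - right. exists (fun j => dh (Fin.FS j)). rewrite dot_homog in hg. split.
    + intros i hi. specialize (hdh i (in_or_app _ _ _ (or_introl hi))).
      rewrite homog_fam_in, dot_homog in hdh by auto. lra.
    + intros i hi. specialize (hdh i (in_or_app _ _ _ (or_intror hi))).
      rewrite homog_fam_notin, dot_homog in hdh by (intro h; apply (hd i); auto). lra.
Qed.

Lemma farkas_positive_coeff {N} (L : list nat) (b : nat -> vec N) (w e : vec N) j :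
  NoDup L -> In j L -> (forall i, In i L -> 0 <= dot e (b i)) -> 0 < dot e w ->
  (exists kap, (forall i, 0 <= kap i) /\ w = lincomb_idx kap b L) ->
  (exists kap, (forall i, 0 <= kap i) /\ w = lincomb_idx kap b L /\ 0 < kap j) \/
  (exists d, (forall i, In i L -> dot (b i) d <= 0) /\ dot w d = 0 /\ dot (b j) d < 0).
Proof.
  intros hnd hj he hew [k0 [hk0 ew]].
  assert (hnd0 : NoDup (0%nat :: nil)) by (constructor; [intros []|constructor]).
  destruct (farkas_mixed L (0%nat :: nil) b (fun _ => w) (vscale (-1) (b j)) hnd hnd0)
    as [[nu [tau' [hnu enu]]]|[d [hd1 [hd2 hd3]]]].
  - left. set (tau := tau' 0%nat).
    assert (ebj : forall q, - b j q = wsum nu (fun i => b i q) L + tau * w q).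
    { intro q. assert (hq := f_equal (fun v => v q) enu). simpl in hq.
      unfold vadd, vscale, vzero in hq. rewrite lincomb_coord in hq. fold tau in hq. lra. }
    (* Pairing with [e] shows [tau <= 0], so [1 - tau] is a positive normaliser. *)
    assert (htau : tau <= 0).
    { assert (hdot : - dot e (b j) = wsum nu (fun i => dot e (b i)) L + tau * dot e w).
      { assert (h := f_equal (fun v => dot v e) enu). cbv beta in h.
        change (lincomb_idx tau' (fun _ => w) (0%nat :: nil)) with (vadd (vscale tau w) vzero) in h.
        rewrite dot_scalel, !dot_addl, dot_scalel, lincomb_dot, dot_zerol in h.
        rewrite (dot_comm e (b j)), (dot_comm e w). unfold wsum in *.
        rewrite (sumR_map_ext _ (fun i => nu i * dot (b i) e)) by (intros; rewrite dot_comm; ring). lra. }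
      assert (0 <= wsum nu (fun i => dot e (b i)) L) by (apply wsum_nonneg; auto).
      specialize (he j hj). nra. }
    assert (hinv : 0 < / (1 - tau)) by (apply Rinv_0_lt_compat; lra).
    exists (fun i => / (1 - tau) * (k0 i + nu i + (if Nat.eq_dec i j then 1 else 0))).
    split; [|split].
    + intro i. specialize (hk0 i). specialize (hnu i). destruct Nat.eq_dec; nra.
    + apply vec_ext; intro q. rewrite lincomb_coord, wsum_scale_add3, wsum_delta by auto.
      assert (hq := f_equal (fun v => v q) ew). simpl in hq. rewrite lincomb_coord in hq.
      rewrite <- hq. specialize (ebj q).
      replace (wsum nu (fun i => b i q) L) with (- b j q - tau * w q) by lra.
      field. lra.
    + specialize (hk0 j). specialize (hnu j). destruct Nat.eq_dec; [|congruence]. nra.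
  - right. exists d. split; [auto|split].
    + apply (hd2 0%nat). left; reflexivity.
    + rewrite dot_scalel in hd3. lra.
Qed.

Lemma lincomb_all_pos {N} (L : list nat) (b : nat -> vec N) (w : vec N) :
  (exists kap, (forall i, 0 <= kap i) /\ w = lincomb_idx kap b L) ->
  (forall j, In j L -> exists kap, (forall i, 0 <= kap i) /\ w = lincomb_idx kap b L /\ 0 < kap j) ->
  exists kap, (forall i, 0 <= kap i) /\ w = lincomb_idx kap b L /\ forall j, In j L -> 0 < kap j.
Proof.
  intros [k0 [hk0 ew]] hpos.
  (* Averaging two representations keeps every positive coefficient positive. *)
  enough (H : forall L', (forall j, In j L' -> In j L) -> exists kap, (forall i, 0 <= kap i) /\
             w = lincomb_idx kap b L /\ forall j, In j L' -> 0 < kap j) by (apply (H L); auto).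
  induction L' as [|j L' IH]; intro hsub.
  - exists k0. repeat split; auto. intros j [].
  - destruct IH as [k1 [hk1 [ek1 pk1]]]; [intros; apply hsub; simpl; auto|].
    destruct (hpos j (hsub j (or_introl eq_refl))) as [k2 [hk2 [ek2 pk2]]].
    exists (fun i => / 2 * (k1 i + k2 i)). split; [|split].
    + intro i. specialize (hk1 i). specialize (hk2 i). lra.
    + apply vec_ext; intro q. rewrite lincomb_coord, wsum_scale_add.
      assert (h1 := f_equal (fun v => v q) ek1). assert (h2 := f_equal (fun v => v q) ek2).
      simpl in h1, h2. rewrite lincomb_coord in h1, h2. rewrite <- h1, <- h2. field.
    + intros i [<-|hi]; [specialize (hk1 j); lra|]. specialize (pk1 i hi). specialize (hk2 i). lra.
Qed.

Lemma lincomb_bounded_coeffs {N} (L : list nat) (b : nat -> vec N) : NoDup L ->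
  exists K, 0 <= K /\ forall w, (exists nu, w = lincomb_idx nu b L) ->
    exists nu, w = lincomb_idx nu b L /\ forall i, Rabs (nu i) <= K * vnorm w.
Proof.
  induction L as [|i0 L IH]; intro hnd.
  { exists 0. split; [lra|]. intros w [nu hw]. exists (fun _ => 0). split.
    - rewrite hw; reflexivity.
    - intros; rewrite Rabs_R0; lra. }
  inversion hnd as [|? ? hni hnd']; subst. destruct (IH hnd') as [K [hK HK]].
  destruct (classic (exists c, b i0 = lincomb_idx c b L)) as [[c hc]|hc].
  { exists K. split; auto. intros w [nu hw].
    destruct (HK w) as [nu' [hw' hb]].
    { exists (fun i => nu i0 * c i + nu i). rewrite lincomb_lin, <- hc, hw. reflexivity. }
    exists (fun i => if Nat.eq_dec i i0 then 0 else nu' i). split.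
    - rewrite lincomb_cons_upd, <- hw' by auto. apply vec_ext; intro; unfold vadd, vscale; ring.
    - intro i. destruct Nat.eq_dec; auto. rewrite Rabs_R0. pose proof (vnorm_pos w). nra. }
  (* [b i0] is independent of the others: a direction [d] orthogonal to them reads off its coefficient. *)
  destruct (farkas_span L b (b i0) hnd' hc) as [d [hd hbd]].
  set (beta := dot (b i0) d) in *. set (C1 := vnorm d / beta).
  pose proof (vnorm_pos (b i0)).
  assert (hC1 : 0 <= C1) by (unfold C1; apply Rmult_le_pos; [apply vnorm_pos|left; apply Rinv_0_lt_compat; auto]).
  exists (C1 + K * (1 + C1 * vnorm (b i0))). split.
  { apply Rplus_le_le_0_compat; auto. apply Rmult_le_pos; auto. nra. }
  intros w [nu hw]. pose proof (vnorm_pos w).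
  set (c0 := dot w d / beta).
  assert (hc0 : c0 = nu i0).
  { unfold c0. rewrite hw. simpl. rewrite dot_addl, dot_scalel, dot_lincomb_orth by auto.
    fold beta. field. lra. }
  assert (hbc0 : Rabs c0 <= C1 * vnorm w).
  { unfold c0, C1, Rdiv. rewrite Rabs_mult, Rabs_inv, (Rabs_right beta) by lra.
    pose proof (dot_abs_le_norm w d). pose proof (Rinv_0_lt_compat beta hbd).
    replace (vnorm d * / beta * vnorm w) with ((vnorm w * vnorm d) * / beta) by ring.
    apply Rmult_le_compat_r; lra. }
  set (w' := vadd w (vscale (- c0) (b i0))).
  destruct (HK w') as [nu' [hw'' hb]].
  { exists nu. unfold w'. rewrite hw, hc0. simpl. apply vec_ext; intro; unfold vadd, vscale; ring. }
  assert (hnw' : vnorm w' <= (1 + C1 * vnorm (b i0)) * vnorm w).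
  { pose proof (vnorm_triangle w (vscale (- c0) (b i0))). rewrite vnorm_scale, Rabs_Ropp in H1.
    fold w' in H1. nra. }
  exists (fun i => if Nat.eq_dec i i0 then c0 else nu' i). split.
  - rewrite lincomb_cons_upd, <- hw'' by auto. unfold w'.
    apply vec_ext; intro; unfold vadd, vscale; ring.
  - intro i. assert (0 <= C1 * vnorm w) by (apply Rmult_le_pos; auto).
    assert (0 <= K * ((1 + C1 * vnorm (b i0)) * vnorm w)) by (apply Rmult_le_pos; auto; nra).
    destruct Nat.eq_dec; [nra|].
    specialize (hb i). assert (K * vnorm w' <= K * ((1 + C1 * vnorm (b i0)) * vnorm w))
      by (apply Rmult_le_compat_l; auto). nra.
Qed.

(** * Relative interiors of polyhedral combinations *)

Lemma affcomb_pcomb {N} L1 L2 (u v : nat -> vec N) (l : list (R * vec N)) :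
  (forall p, In p l -> pcomb L1 L2 u v (snd p)) ->
  exists Lam M, sumR (map Lam L1) = sumR (map fst l) /\
    lincomb l = vadd (lincomb_idx Lam u L1) (lincomb_idx M v L2).
Proof. induction l as [|[c w] l IH]; intro H.
  - exists (fun _ => 0), (fun _ => 0). split.
    + simpl. apply sumR_map_zero.
    + apply vec_ext; intro j. unfold vadd. rewrite !lincomb_coord. unfold wsum.
      rewrite (sumR_map_ext _ (fun _ => 0)) by (intros; ring).
      rewrite (sumR_map_ext (fun i => 0 * v i j) (fun _ => 0)) by (intros; ring).
      rewrite !sumR_map_zero. simpl. unfold vzero. ring.
  - destruct IH as [Lam [M [h1 h2]]]; [intros; apply H; simpl; auto|].
    destruct (H (c, w) (or_introl eq_refl)) as [lam [mu [_ [_ [hs hw]]]]]. simpl in hs, hw.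
    exists (fun i => c * lam i + Lam i), (fun i => c * mu i + M i). split.
    + rewrite sumR_lin2, hs, h1. simpl. ring.
    + change (vadd (vscale c w) (lincomb l) = vadd (lincomb_idx (fun i => c * lam i + Lam i) u L1)
        (lincomb_idx (fun i => c * mu i + M i) v L2)).
      rewrite h2, hw, !lincomb_lin. apply vec_ext; intro; unfold vadd, vscale; ring. Qed.

Lemma aff_pcomb {N} L1 L2 (u v : nat -> vec N) y : aff (pcomb L1 L2 u v) y ->
  exists Lam M, sumR (map Lam L1) = 1 /\ y = vadd (lincomb_idx Lam u L1) (lincomb_idx M v L2).
Proof. intros [l [h1 [h2 h3]]]. destruct (affcomb_pcomb L1 L2 u v l h1) as [Lam [M [e1 e2]]].
  exists Lam, M. split; [congruence|]. congruence. Qed.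

Lemma homog_diff_lincomb {N} L1 L2 (u v : nat -> vec N) y z ly my lz mz :
  (forall i, In i L1 -> ~ In i L2) -> sumR (map ly L1) = 1 -> sumR (map lz L1) = 1 ->
  y = vadd (lincomb_idx ly u L1) (lincomb_idx my v L2) ->
  z = vadd (lincomb_idx lz u L1) (lincomb_idx mz v L2) ->
  homog (vsub y z) 0 = lincomb_idx (fun i => if inb (In i L1) then ly i - lz i else my i - mz i)
                                   (homog_fam L1 u v) (L1 ++ L2).
Proof.
  intros hd sy sz ey ez. set (del := fun i => if inb (In i L1) then ly i - lz i else my i - mz i).
  rewrite lincomb_homog_fam by auto.
  rewrite (lincomb_ext del (fun i => 1 * ly i + - lz i) u L1).
  2:{ intros i hi. unfold del. rewrite inb_In_true; auto. ring. }
  rewrite (lincomb_ext del (fun i => 1 * my i + - mz i) v L2).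
  2:{ intros i hi. unfold del. rewrite inb_In_false; [ring|]. intro h; apply (hd i); auto. }
  rewrite (sumR_map_ext del (fun i => 1 * ly i + (-1) * lz i)).
  2:{ intros i hi. unfold del. rewrite inb_In_true; auto. ring. }
  rewrite sumR_lin2, sy, sumR_map_scal, sz.
  replace (1 * 1 + -1 * 1) with 0 by ring. f_equal.
  rewrite !lincomb_lin, ey, ez, !lincomb_neg.
  apply vec_ext; intro j. unfold vsub, vadd, vscale. ring.
Qed.

Lemma spcomb_ri_pcomb {N} L1 L2 (u v : nat -> vec N) z : NoDup L1 -> NoDup L2 -> (forall i, In i L1 -> ~ In i L2) ->
  spcomb L1 L2 u v z -> ri (pcomb L1 L2 u v) z.
Proof.
  intros hn1 hn2 hd hz. split; [apply spcomb_pcomb; auto|].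
  (* Weights of [y] relative to [z] can be chosen of size O(|y - z|), so they stay positive. *)
  destruct hz as (lz & mz & hlz & hmz & plz & pmz & slz & ez).
  destruct (lincomb_bounded_coeffs (L1 ++ L2) (homog_fam L1 u v) (NoDup_app_disj _ _ hn1 hn2 hd)) as [K [hK HK]].
  destruct (list_min_pos lz L1 plz) as [d1 [hd1 Hd1]].
  destruct (list_min_pos mz L2 pmz) as [d2 [hd2 Hd2]].
  set (d0 := Rmin d1 d2). assert (hd0 : 0 < d0) by (apply Rmin_pos; auto).
  exists (d0 / (K + 1)). split; [apply Rdiv_lt_0_compat; lra|].
  intros y hy hyz. destruct (aff_pcomb _ _ _ _ _ hy) as [Lam [M [sL ey]]].
  pose proof (homog_diff_lincomb L1 L2 u v y z Lam M lz mz hd sL slz ey ez) as hdel.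
  destruct (HK (homog (vsub y z) 0)) as [nu [enu bnu]]; [eauto|].
  rewrite vnorm_homog0 in bnu. rewrite lincomb_homog_fam in enu by auto.
  apply homog_inj in enu as [enu snu].
  assert (hnu : forall i, Rabs (nu i) < d0).
  { intro i. specialize (bnu i). 
    assert (K * vnorm (vsub y z) <= K * (d0 / (K + 1))) by (apply Rmult_le_compat_l; lra).
    assert (K * (d0 / (K + 1)) < d0).
    { unfold Rdiv. apply Rmult_lt_reg_r with (r := K + 1); [lra|].
      rewrite Rmult_assoc, Rmult_assoc, Rinv_l by lra. nra. }
    lra. }
  exists (fun i => if inb (In i L1) then lz i + nu i else 0),
         (fun i => if inb (In i L2) then mz i + nu i else 0).
  assert (hd01 : d0 <= d1) by apply Rmin_l. assert (hd02 : d0 <= d2) by apply Rmin_r.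
  repeat split.
  - intro i. destruct (inb (In i L1)) eqn:e; [|lra]. apply (proj1 (inb_true _)) in e.
    specialize (Hd1 i e). specialize (hnu i). pose proof (Rle_abs (- nu i)). rewrite Rabs_Ropp in H. lra.
  - intro i. destruct (inb (In i L2)) eqn:e; [|lra]. apply (proj1 (inb_true _)) in e.
    specialize (Hd2 i e). specialize (hnu i). pose proof (Rle_abs (- nu i)). rewrite Rabs_Ropp in H. lra.
  - rewrite (sumR_map_ext _ (fun i => 1 * lz i + nu i)).
    2:{ intros i hi. rewrite inb_In_true; auto. ring. }
    rewrite sumR_lin2, slz, <- snu. ring.
  - rewrite (lincomb_ext _ (fun i => 1 * lz i + nu i) u L1).
    2:{ intros i hi. rewrite inb_In_true; auto. ring. }
    rewrite (lincomb_ext _ (fun i => 1 * mz i + nu i) v L2).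
    2:{ intros i hi. rewrite inb_In_true; auto. ring. }
    rewrite !lincomb_lin. apply vec_ext; intro j.
    assert (hj : vsub y z j = vadd (lincomb_idx nu u L1) (lincomb_idx nu v L2) j) by (rewrite enu; auto).
    rewrite ez in hj. unfold vsub, vadd, vscale in *. lra.
Qed.

Lemma spcomb_mix {N} L1 L2 (u v : nat -> vec N) y c s : 0 <= s < 1 ->
  pcomb L1 L2 u v y -> spcomb L1 L2 u v c ->
  spcomb L1 L2 u v (vadd (vscale s y) (vscale (1 - s) c)).
Proof.
  intros hs (lam & mu & hl & hm & sl & ey) (lc & mc & hlc & hmc & plc & pmc & slc & ec).
  exists (fun i => s * lam i + (1 - s) * lc i), (fun i => s * mu i + (1 - s) * mc i).
  repeat split.
  - intro i; specialize (hl i); specialize (hlc i); nra.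
  - intro i; specialize (hm i); specialize (hmc i); nra.
  - intros i hi; specialize (hl i); specialize (plc i hi); nra.
  - intros i hi; specialize (hm i); specialize (pmc i hi); nra.
  - rewrite sumR_lin2, sl, sumR_map_scal, slc. ring.
  - rewrite !lincomb_lin, !lincomb_scale, ey, ec.
    apply vec_ext; intro j; unfold vadd, vscale; ring.
Qed.

Lemma spcomb_barycenter {N} L1 L2 (u v : nat -> vec N) : L1 <> nil ->
  spcomb L1 L2 u v (vadd (lincomb_idx (fun _ => / INR (length L1)) u L1) (lincomb_idx (fun _ => 1) v L2)).
Proof. intro hne.
  assert (hn1 : 0 < INR (length L1))
    by (destruct L1; [congruence|]; simpl length; rewrite S_INR; pose proof (pos_INR (length L1)); lra).
  exists (fun _ => / INR (length L1)), (fun _ => 1).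
  pose proof (Rinv_0_lt_compat _ hn1).
  repeat split; auto; try (intros; lra).
  rewrite sumR_map_const. field. lra. Qed.

Lemma ri_pcomb_spcomb {N} L1 L2 (u v : nat -> vec N) z : L1 <> nil ->
  ri (pcomb L1 L2 u v) z -> spcomb L1 L2 u v z.
Proof.
  intros hne [hz [eps [heps H]]].
  pose proof (spcomb_barycenter L1 L2 u v hne) as hc. set (c := vadd _ _) in hc.
  (* [z] lies strictly between [c] and a point [z'] of the polytope slightly beyond [z]. *)
  destruct (extension_near z c eps heps) as [t [ht hnear]].
  set (z' := vadd z (vscale t (vsub z c))) in hnear.
  assert (hz' : pcomb L1 L2 u v z') by (apply H; [apply aff_two; auto; apply spcomb_pcomb; auto|auto]).
  replace z with (vadd (vscale (/ (1 + t)) z') (vscale (1 - / (1 + t)) c)).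
  - apply spcomb_mix; auto. split; [left; apply Rinv_0_lt_compat; lra|].
    rewrite <- Rinv_1. apply Rinv_lt_contravar; lra.
  - apply vec_ext; intro j. unfold z', vadd, vscale, vsub. field. lra.
Qed.

Lemma ri_pcomb {N} L1 L2 (u v : nat -> vec N) : NoDup L1 -> NoDup L2 -> (forall i, In i L1 -> ~ In i L2) ->
  L1 <> nil -> ri (pcomb L1 L2 u v) = spcomb L1 L2 u v.
Proof. intros. apply pred_ext; intro z; split.
  - apply ri_pcomb_spcomb; auto. - apply spcomb_ri_pcomb; auto. Qed.

Lemma pcomb_closure_spcomb {N} L1 L2 (u v : nat -> vec N) g : L1 <> nil ->
  pcomb L1 L2 u v g -> closure (spcomb L1 L2 u v) g.
Proof.
  intros hne hg eps heps.
  pose proof (spcomb_barycenter L1 L2 u v hne) as hc. set (c := vadd _ _) in hc.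
  destruct (segment_near g c eps heps) as [t [ht hnear]].
  eexists; split; [|exact hnear].
  replace (vadd g (vscale t (vsub c g))) with (vadd (vscale (1 - t) g) (vscale (1 - (1 - t)) c))
    by (apply vec_ext; intro j; unfold vadd, vscale, vsub; ring).
  apply spcomb_mix; auto. lra.
Qed.

Lemma conv_fam_pcomb {N} (P : nat -> Prop) (a : nat -> vec N) L : NoDup L -> (forall i, P i <-> In i L) ->
  conv_fam P a = pcomb L nil a a.
Proof. intros hnd hP. apply pred_ext; intro y. split.
  - intros (l & lam & hin & hl & hs & ey).
    destruct (lincomb_collapse a L hnd l lam) as [lam' [h1 [h2 h3]]]; auto. intros; apply hP; auto.
    exists lam', (fun _ => 0). split; [auto|split; [intros; lra|split; [rewrite h2; auto|]]].
    rewrite ey, <- h3. apply vec_ext; intro; unfold vadd; simpl; unfold vzero; ring.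
  - intros (lam & mu & hl & hm & hs & ey). exists L, lam. repeat split; auto.
    + intros; apply hP; auto.
    + rewrite ey. apply vec_ext; intro; unfold vadd; simpl; unfold vzero; ring. Qed.

(* The convex part is the single point [vzero], carried by the dummy index [0]. *)
Lemma cone_fam_pcomb {N} (P : nat -> Prop) (a : nat -> vec N) L : NoDup L -> (forall i, P i <-> In i L) ->
  cone_fam P a = pcomb (0%nat :: nil) L (fun _ => vzero) a.
Proof. intros hnd hP. apply pred_ext; intro y. split.
  - intros (l & lam & hin & hl & ey).
    destruct (lincomb_collapse a L hnd l lam) as [lam' [h1 [h2 h3]]]; auto. intros; apply hP; auto.
    exists (fun _ => 1), lam'. split; [intros; lra|split; [auto|split; [simpl; ring|]]].
    rewrite ey, <- h3. apply vec_ext; intro; unfold vadd, vscale; simpl; unfold vadd, vscale, vzero; ring.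
  - intros (lam & mu & hl & hm & hs & ey). exists L, mu. repeat split; auto.
    + intros; apply hP; auto.
    + rewrite ey. apply vec_ext; intro; unfold vadd; simpl; unfold vadd, vscale, vzero; ring. Qed.

Lemma msum_ri_conv_cone {N} (P1 P2 : nat -> Prop) (a : nat -> vec N) L1 L2 :
  NoDup L1 -> NoDup L2 -> (forall i, In i L1 -> ~ In i L2) -> L1 <> nil -> ~ In 0%nat L2 ->
  (forall i, P1 i <-> In i L1) -> (forall i, P2 i <-> In i L2) ->
  msum (ri (conv_fam P1 a)) (ri (cone_fam P2 a)) = spcomb L1 L2 a a.
Proof.
  intros h1 h2 hd hne h0 hP1 hP2.
  rewrite (conv_fam_pcomb P1 a L1), (cone_fam_pcomb P2 a L2) by auto.
  rewrite !ri_pcomb; auto; try (constructor; [simpl; auto|constructor]); try congruence.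
  2:{ intros i [<-|[]]; auto. }
  apply pred_ext; intro z. split.
  - intros (x1 & x2 & (l1 & m1 & hl1 & hm1 & pl1 & pm1 & s1 & e1) & (l2 & m2 & hl2 & hm2 & pl2 & pm2 & s2 & e2) & ez).
    exists l1, m2. repeat split; auto.
    rewrite ez, e1, e2. apply vec_ext; intro; unfold vadd; simpl; unfold vadd, vscale, vzero; ring.
  - intros (l & mu & hl & hm & pl & pm & s & ez).
    exists (vadd (lincomb_idx l a L1) (lincomb_idx (fun _ => 1) a nil)),
           (vadd (lincomb_idx (fun _ => 1) (fun _ => vzero) (0%nat :: nil)) (lincomb_idx mu a L2)).
    split; [|split].
    + exists l, (fun _ => 1). repeat split; auto; try (intros; lra); intros i [].
    + exists (fun _ => 1), mu. repeat split; auto; try (intros; lra); try (simpl; ring).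
    + rewrite ez. apply vec_ext; intro; unfold vadd; simpl; unfold vadd, vscale, vzero; ring.
  - constructor.
Qed.

Lemma rmax_ge (f : nat -> R) k i : (1 <= i <= k)%nat -> f i <= rmax_range f k.
Proof. induction k; intros h; [lia|]. destruct k.
  - simpl. assert (i = 1%nat) by lia; subst; lra.
  - change (rmax_range f (S (S k))) with (Rmax (rmax_range f (S k)) (f (S (S k)))).
    destruct (Nat.eq_dec i (S (S k))).
    + subst. apply Rmax_r.
    + eapply Rle_trans; [apply IHk; lia|apply Rmax_l]. Qed.

Lemma rmax_att (f : nat -> R) k : (1 <= k)%nat -> exists i, (1 <= i <= k)%nat /\ rmax_range f k = f i.
Proof. induction k; intros h; [lia|]. destruct k.
  - exists 1%nat; split; [lia|reflexivity].
  - change (rmax_range f (S (S k))) with (Rmax (rmax_range f (S k)) (f (S (S k)))).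
    destruct (IHk ltac:(lia)) as [i [hi e]].
    unfold Rmax; destruct Rle_dec.
    + exists (S (S k)); split; [lia|auto].
    + exists i; split; [lia|auto]. Qed.

Lemma esup_val (P : R -> Prop) v : P v -> (forall t, P t -> t <= v) -> esup P = Fin v.
Proof. intros hv hb. unfold esup. destruct excluded_middle_informative as [h|h].
  - f_equal. destruct (completeness P (proj1 h) (proj2 h)) as [l [hl1 hl2]]. simpl.
    apply Rle_antisym. apply hl2. intros t ht; auto. apply hl1; auto.
  - exfalso. apply h. split; [exists v; intros t ht; auto|eauto]. Qed.

Lemma esup_ub (P : R -> Prop) s t : esup P = Fin s -> P t -> t <= s.
Proof. unfold esup. destruct excluded_middle_informative as [h|h]; [|discriminate].
  intros e. inversion e. destruct (completeness P (proj1 h) (proj2 h)) as [l [hl1 hl2]]. simpl. auto. Qed.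

Lemma esup_le (P : R -> Prop) v : (exists t, P t) -> (forall t, P t -> t <= v) -> exists s, esup P = Fin s /\ s <= v.
Proof. intros hne hb. unfold esup. destruct excluded_middle_informative as [h|h].
  - eexists; split; [reflexivity|]. destruct (completeness P (proj1 h) (proj2 h)) as [l [hl1 hl2]]. simpl.
    apply hl2. intros t ht; auto.
  - exfalso. apply h. split; [exists v; intros t ht; auto|auto]. Qed.

(** * The polyhedral function *)

Section Poly.

Variables (N k m : nat) (a : nat -> vec N) (alpha : nat -> R).

Hypothesis Hk : (1 <= k <= m)%nat.

Hypothesis Hdom : exists x : vec N, poly_feas k m a alpha x.

Definition ell i (x : vec N) := dot (a i) x - alpha i.

Definition Rval (x : vec N) := rmax_range (fun i => ell i x) k.

Definition feas (x : vec N) := poly_feas k m a alpha x.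

Definition active (x : vec N) (i : nat) : Prop :=
  ((1 <= i <= k)%nat /\ ell i x = Rval x) \/ ((k + 1 <= i <= m)%nat /\ dot (a i) x = alpha i).

Definition Rf := polyR k m a alpha.

Lemma polyR_fin x : feas x -> Rf x = Fin (Rval x).
Proof. intro h. unfold Rf, polyR. destruct excluded_middle_informative; [reflexivity|contradiction]. Qed.

Lemma polyR_fin_iff x r : Rf x = Fin r <-> feas x /\ r = Rval x.
Proof. split.
  - unfold Rf, polyR. destruct excluded_middle_informative; intro h; [|discriminate].
    inversion h; auto.
  - intros [h ->]. apply polyR_fin; auto. Qed.

Lemma edom_polyR x : edom Rf x <-> feas x.
Proof. split. intros [r h]. apply polyR_fin_iff in h; tauto. intro h; exists (Rval x); apply polyR_fin; auto. Qed.

Lemma ell_le_Rval x i : (1 <= i <= k)%nat -> ell i x <= Rval x.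
Proof. intro; apply (rmax_ge (fun i => ell i x)); auto. Qed.

Lemma Rval_attained x : exists i, (1 <= i <= k)%nat /\ Rval x = ell i x.
Proof. apply (rmax_att (fun i => ell i x)); lia. Qed.

Lemma Imax_Ifeas_active x i : feas x -> ((Imax k m a alpha x i \/ Ifeas k m a alpha x i) <-> active x i).
Proof. intro hf. unfold Imax, Ifeas, active. fold Rf. rewrite polyR_fin by auto.
  split; intros [[h1 h2]|[h1 h2]].
  - left; split; auto. inversion h2; unfold ell, Rval; auto.
  - right; auto.
  - left; split; auto. f_equal. symmetry; auto.
  - right; auto. Qed.

Lemma M_I_iff I x : M_I k m a alpha I x <-> feas x /\ forall i, I i <-> active x i.
Proof. unfold M_I. fold Rf. rewrite edom_polyR. split.
  - intros [hf h]. split; auto. intro i. rewrite h. apply Imax_Ifeas_active; auto.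
  - intros [hf h]. split; auto. intro i. rewrite h. symmetry; apply Imax_Ifeas_active; auto. Qed.

Lemma active_range x i : active x i -> (1 <= i <= m)%nat.
Proof. unfold active; lia. Qed.

Lemma ell_line i (x : vec N) t (w : vec N) : ell i (vadd x (vscale t w)) = ell i x + t * dot (a i) w.
Proof. unfold ell. rewrite dot_addr, dot_scaler. ring. Qed.

Lemma Rval_le (x : vec N) c : (forall i, (1 <= i <= k)%nat -> ell i x <= c) -> Rval x <= c.
Proof. intro h. destruct (Rval_attained x) as [i [hi e]]. rewrite e; auto. Qed.

Lemma Rval_lt (x : vec N) c : (forall i, (1 <= i <= k)%nat -> ell i x < c) -> Rval x < c.
Proof. intro h. destruct (Rval_attained x) as [i [hi e]]. rewrite e; auto. Qed.

Definition Lmax (I : nat -> Prop) := sel I 1 k.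

Definition Lfeas (I : nat -> Prop) := sel I (k + 1) (m - k).

Lemma Lmax_In I i : In i (Lmax I) <-> I i /\ (1 <= i <= k)%nat.
Proof. unfold Lmax; rewrite sel_In. split; intros [h1 h2]; split; auto; lia. Qed.

Lemma Lfeas_In I i : In i (Lfeas I) <-> I i /\ (k + 1 <= i <= m)%nat.
Proof. unfold Lfeas; rewrite sel_In. split; intros [h1 h2]; split; auto; lia. Qed.

Lemma Lmax_Lfeas_disj I i : In i (Lmax I) -> ~ In i (Lfeas I).
Proof. rewrite Lmax_In, Lfeas_In. lia. Qed.

Lemma Lmax_NoDup I : NoDup (Lmax I). Proof. apply sel_NoDup. Qed.

Lemma Lfeas_NoDup I : NoDup (Lfeas I). Proof. apply sel_NoDup. Qed.

Definition subgrads I := pcomb (Lmax I) (Lfeas I) a a.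

Definition dual_stratum I := spcomb (Lmax I) (Lfeas I) a a.

Lemma subdiff_iff x g : feas x ->
  (subdiff Rf x g <-> forall y, feas y -> Rval x + dot g (vsub y x) <= Rval y).
Proof. intro hf. unfold subdiff. split.
  - intros [fx [e H]] y hy. rewrite polyR_fin in e by auto. inversion e; subst.
    apply H. apply polyR_fin; auto.
  - intro H. exists (Rval x). split; [apply polyR_fin; auto|]. intros y fy e.
    apply polyR_fin_iff in e as [hy ->]. auto. Qed.

Lemma subgrads_subdiff x g : feas x -> subgrads (active x) g -> subdiff Rf x g.
Proof.
  intros hf (lam & mu & hl & hm & sl & eg). apply subdiff_iff; auto. intros y hy.
  rewrite eg, dot_addl, !lincomb_dot. unfold wsum.
  assert (sumR (map (fun i => lam i * dot (a i) (vsub y x)) (Lmax (active x))) <= 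
          sumR (map (fun i => lam i * (Rval y - Rval x)) (Lmax (active x)))).
  { apply sumR_map_le. intros i hi. apply Lmax_In in hi as [ha hi].
    apply Rmult_le_compat_l; auto. rewrite dot_subr.
    destruct ha as [[_ ha]|[hr _]]; [|lia].
    pose proof (ell_le_Rval y i hi). unfold ell in *. lra. }
  assert (sumR (map (fun i => mu i * dot (a i) (vsub y x)) (Lfeas (active x))) <= 0).
  { rewrite <- (sumR_map_zero (Lfeas (active x))). apply sumR_map_le. intros i hi. apply Lfeas_In in hi as [ha hi].
    destruct ha as [[hr _]|[_ ha]]; [lia|].
    specialize (hy i hi). rewrite dot_subr. specialize (hm i). nra. }
  rewrite (sumR_map_ext (fun i => lam i * (Rval y - Rval x)) (fun i => (Rval y - Rval x) * lam i)) in H by (intros; ring).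
  rewrite sumR_map_scal, sl in H. lra.
Qed.

Lemma inactive_persist z d c : feas z ->
  exists t0, 0 < t0 /\ forall t, 0 < t < t0 -> forall i, (1 <= i <= m)%nat -> ~ active z i ->
    ((i <= k)%nat -> ell i (vadd z (vscale t d)) < Rval z + t * c) /\
    ((k + 1 <= i)%nat -> ell i (vadd z (vscale t d)) < 0).
Proof.
  intro hz.
  destruct (small_step_all (seq 1 m) (fun i t => ~ active z i ->
      ((i <= k)%nat -> ell i (vadd z (vscale t d)) < Rval z + t * c) /\
      ((k + 1 <= i)%nat -> ell i (vadd z (vscale t d)) < 0))) as [t0 [ht0 Ht0]].
  - intros i hi. apply in_seq in hi. destruct (classic (active z i)) as [ha|hna].
    { exists 1. split; [lra|]. intros; contradiction. }
    destruct (Compare_dec.le_lt_dec i k).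
    + assert (ell i z < Rval z).
      { destruct (ell_le_Rval z i ltac:(lia)); auto. exfalso; apply hna; left; split; [lia|auto]. }
      destruct (small_step_neg (ell i z - Rval z) (dot (a i) d - c)) as [dd [hdd Hdd]]; [lra|].
      exists dd; split; auto. intros t ht _. rewrite ell_line. specialize (Hdd t ht).
      split; intros; [lra|lia].
    + assert (ell i z < 0).
      { destruct (hz i ltac:(lia)); auto. exfalso; apply hna; right; split; [lia|]. unfold ell in H; lra. }
      destruct (small_step_neg (ell i z) (dot (a i) d)) as [dd [hdd Hdd]]; [lra|].
      exists dd; split; auto. intros t ht _. rewrite ell_line. specialize (Hdd t ht).
      split; intros; [lia|lra].
  - exists t0. split; auto. intros t ht i hi. apply (Ht0 t ht i). apply in_seq; lia.
Qed.

Lemma subdiff_subgrads x g : feas x -> subdiff Rf x g -> subgrads (active x) g.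
Proof.
  intros hf hs. rewrite subdiff_iff in hs by auto. pose proof Hk.
  destruct (farkas_pcomb (Lmax (active x)) (Lfeas (active x)) a g (Lmax_NoDup _) (Lfeas_NoDup _) (Lmax_Lfeas_disj _))
    as [h|[d [hd1 hd2]]]; auto. exfalso.
  (* Moving from [x] along the separating direction [d] decreases [R] faster than [g] allows. *)
  destruct (inactive_persist x d (dot g d) hf) as [t0 [ht0 Ht0]].
  set (t := t0 / 2). assert (ht : 0 < t < t0) by (unfold t; lra).
  set (y := vadd x (vscale t d)).
  assert (hstep : forall i, (1 <= i <= m)%nat ->
    ((i <= k)%nat -> ell i y < Rval x + t * dot g d) /\ ((k + 1 <= i)%nat -> ell i y <= 0)).
  { intros i hi. destruct (classic (active x i)) as [ha|hna].
    - unfold y. rewrite ell_line. split; intro hik.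
      + assert (hin : In i (Lmax (active x))) by (apply Lmax_In; split; auto; lia).
        specialize (hd1 i hin). destruct ha as [[_ ha]|[hr _]]; [|lia]. rewrite ha. nra.
      + assert (hin : In i (Lfeas (active x))) by (apply Lfeas_In; split; auto; lia).
        specialize (hd2 i hin). destruct ha as [[hr _]|[_ ha]]; [lia|]. unfold ell. rewrite ha. nra.
    - destruct (Ht0 t ht i hi hna) as [h1 h2]. split; intro; [auto|left; auto]. }
  assert (hy : feas y) by (intros i hi; apply (hstep i ltac:(lia)); lia).
  assert (hlt : Rval y < Rval x + t * dot g d)
    by (apply Rval_lt; intros i hi; apply (hstep i ltac:(lia)); lia).
  specialize (hs y hy). replace (vsub y x) with (vscale t d) in hs by (symmetry; apply vsub_line).
  rewrite dot_scaler in hs. lra.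
Qed.

Lemma subdiff_polyR x : feas x -> subdiff Rf x = subgrads (active x).
Proof. intro hf. apply pred_ext; intro g.
  split; [apply subdiff_subgrads; auto|apply subgrads_subdiff; auto]. Qed.

Lemma conj_values_iff g t : (exists x r, Rf x = Fin r /\ t = dot g x - r) <-> exists x, feas x /\ t = dot g x - Rval x.
Proof. split.
  - intros [x [r [e ->]]]. apply polyR_fin_iff in e as [hx ->]. eauto.
  - intros [x [hx ->]]. exists x, (Rval x). split; auto. apply polyR_fin; auto. Qed.

Lemma conjugate_at_subgrad x g : feas x -> subdiff Rf x g -> conjugate Rf g = Fin (dot g x - Rval x).
Proof. intros hx hs. rewrite subdiff_iff in hs by auto. unfold conjugate. apply esup_val.
  - apply conj_values_iff. eauto.
  - intros t ht. apply conj_values_iff in ht as [y [hy ->]]. specialize (hs y hy). rewrite dot_subr in hs. lra. Qed.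

Lemma conjugate_ub g c y : conjugate Rf g = Fin c -> feas y -> dot g y - Rval y <= c.
Proof. intros e hy. eapply esup_ub; [apply e|]. apply conj_values_iff. eauto. Qed.

Lemma subdiff_conj_inv g y : subdiff (conjugate Rf) g y -> feas y /\ subdiff Rf y g.
Proof.
  intros [c [ec H]].
  assert (hfy : feas y).
  { intros j hj. apply Rnot_lt_le. intro hlt.
    destruct (esup_le (fun t => exists x r, Rf x = Fin r /\ t = dot (vadd g (a j)) x - r) (c + alpha j))
      as [s [es hs]].
    - destruct Hdom as [x hx].
      exists (dot (vadd g (a j)) x - Rval x). apply conj_values_iff; eauto.
    - intros t ht. apply conj_values_iff in ht as [x [hx ->]]. rewrite dot_addl.
      pose proof (conjugate_ub g c x ec hx). specialize (hx j hj). lra.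
    - specialize (H _ _ es). 
      replace (vsub (vadd g (a j)) g) with (a j) in H by (apply vec_ext; intro; unfold vsub, vadd; ring).
      rewrite dot_comm in H. lra. }
  split; auto.
  destruct (Rval_attained y) as [i [hi ei]].
  destruct (esup_le (fun t => exists x r, Rf x = Fin r /\ t = dot (a i) x - r) (alpha i)) as [s [es hs]].
  - exists (dot (a i) y - Rval y). apply conj_values_iff; eauto.
  - intros t ht. apply conj_values_iff in ht as [x [hx ->]].
    pose proof (ell_le_Rval x i hi). unfold ell in H0. lra.
  - specialize (H _ _ es). rewrite dot_subr, (dot_comm y (a i)), (dot_comm y g) in H.
    apply subdiff_iff; auto. intros z hz. pose proof (conjugate_ub g c z ec hz).
    rewrite dot_subr. rewrite ei in *. unfold ell in *. lra.
Qed.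

Lemma subdiff_conj g y : feas y -> subdiff Rf y g -> subdiff (conjugate Rf) g y.
Proof. intros hy hs. exists (dot g y - Rval y). split; [apply conjugate_at_subgrad; auto|].
  intros h fh e. pose proof (conjugate_ub h fh y e hy). rewrite dot_subr, !(dot_comm y). lra. Qed.

Lemma subdiff_nonempty x : feas x -> exists g, subdiff Rf x g.
Proof. intro hx. destruct (Rval_attained x) as [i [hi e]]. exists (a i). apply subdiff_iff; auto.
  intros y hy. pose proof (ell_le_Rval y i hi). rewrite dot_subr. rewrite e. unfold ell in *. lra. Qed.

Lemma dom_subdiff_polyR : dom_subdiff Rf = edom Rf.
Proof. apply pred_ext; intro x. rewrite edom_polyR. split.
  - intros [g [fx [e _]]]. apply polyR_fin_iff in e; tauto.
  - intro hx. destruct (subdiff_nonempty x hx) as [g hg]. exists g; auto. Qed.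

Lemma dom_subdiff_conj g : dom_subdiff (conjugate Rf) g <-> exists x, feas x /\ subdiff Rf x g.
Proof. split.
  - intros [y hy]. apply subdiff_conj_inv in hy. eauto.
  - intros [x [hx hs]]. exists x. apply subdiff_conj; auto. Qed.

Lemma M_I_active I x0 : M_I k m a alpha I x0 -> I = active x0.
Proof. intro h. apply M_I_iff in h as [_ h]. apply pred_ext; auto. Qed.

Lemma M_active_iff x0 x : M_I k m a alpha (active x0) x <-> feas x /\ active x = active x0.
Proof. rewrite M_I_iff. split.
  - intros [hf h]. split; auto. apply pred_ext; intro i; symmetry; auto.
  - intros [hf h]. split; auto. rewrite h; tauto. Qed.

Lemma Lmax_active_nonempty x : Lmax (active x) <> nil.
Proof. destruct (Rval_attained x) as [i [hi e]]. intro h.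
  assert (In i (Lmax (active x))) by (apply Lmax_In; split; auto; left; split; auto).
  rewrite h in H; contradiction. Qed.

Definition face (I : nat -> Prop) : vset N := fun x => feas x /\ forall i, I i -> active x i.

(* For [g] in the dual stratum of [active x0] with weights [lam], [mu], the function
   [R - <g,.>] is [gap] up to a constant; [gap] is nonnegative on the domain and vanishes
   exactly on [face (active x0)], the set of minimisers, i.e. the subdifferential of [R^*] at [g]. *)
Section GapFunction.

Variables (x0 : vec N) (hx0 : feas x0).

Variables (g : vec N) (lam mu : nat -> R).

Hypotheses (hl : forall i, 0 <= lam i) (hm : forall i, 0 <= mu i)
  (pl : forall i, In i (Lmax (active x0)) -> 0 < lam i) (pm : forall i, In i (Lfeas (active x0)) -> 0 < mu i)
  (sl : sumR (map lam (Lmax (active x0))) = 1)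
  (eg : g = vadd (lincomb_idx lam a (Lmax (active x0))) (lincomb_idx mu a (Lfeas (active x0)))).

Definition gap y := wsum lam (fun i => Rval y - ell i y) (Lmax (active x0)) +
  wsum mu (fun j => alpha j - dot (a j) y) (Lfeas (active x0)).

Definition gap_const := wsum lam alpha (Lmax (active x0)) + wsum mu alpha (Lfeas (active x0)).

Lemma gap_eq y : Rval y - dot g y = gap y - gap_const.
Proof. unfold gap, gap_const. rewrite eg, dot_addl, !lincomb_dot. unfold ell.
  rewrite (wsum_ext lam lam (fun i => Rval y - (dot (a i) y - alpha i))
                          (fun i => (Rval y - dot (a i) y) - - alpha i)) by (intros; ring).
  rewrite !wsum_sub, wsum_const, sl.
  rewrite (wsum_ext lam lam (fun i => - alpha i) (fun i => 0 - alpha i)) by (intros; ring).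
  rewrite wsum_sub. rewrite (wsum_zero_all lam (fun _ => 0)) by auto. ring. Qed.

Lemma gap_nonneg y : feas y -> 0 <= gap y.
Proof. intro hy. unfold gap. apply Rplus_le_le_0_compat; apply wsum_nonneg; auto.
  - intros i hi. apply Lmax_In in hi as [_ hi]. pose proof (ell_le_Rval y i hi). lra.
  - intros j hj. apply Lfeas_In in hj as [_ hj]. specialize (hy j hj). lra. Qed.

Lemma gap_zero_active y : feas y -> gap y <= 0 -> forall i, active x0 i -> active y i.
Proof. intros hy hp i hi. unfold gap in hp.
  assert (h1 : 0 <= wsum lam (fun i => Rval y - ell i y) (Lmax (active x0))).
  { apply wsum_nonneg; auto. intros j hj. apply Lmax_In in hj as [_ hj]. pose proof (ell_le_Rval y j hj). lra. }
  assert (h2 : 0 <= wsum mu (fun j => alpha j - dot (a j) y) (Lfeas (active x0))).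
  { apply wsum_nonneg; auto. intros j hj. apply Lfeas_In in hj as [_ hj]. specialize (hy j hj). lra. }
  pose proof (active_range x0 i hi).
  destruct (Compare_dec.le_lt_dec i k).
  - left. split; [lia|].
    assert (In i (Lmax (active x0))) by (apply Lmax_In; split; auto; lia).
    pose proof (wsum_zero_pos lam (fun i => Rval y - ell i y) _ pl) as hz.
    assert (Rval y - ell i y = 0).
    { apply hz; auto. intros j hj. apply Lmax_In in hj as [_ hj]. pose proof (ell_le_Rval y j hj). lra. lra. }
    lra.
  - right. split; [lia|].
    assert (In i (Lfeas (active x0))) by (apply Lfeas_In; split; auto; lia).
    pose proof (wsum_zero_pos mu (fun j => alpha j - dot (a j) y) _ pm) as hz.
    assert (alpha i - dot (a i) y = 0).
    { apply hz; auto. intros j hj. apply Lfeas_In in hj as [_ hj]. specialize (hy j hj). lra. lra. }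
    lra. Qed.

Lemma active_gap_zero y : feas y -> (forall i, active x0 i -> active y i) -> gap y = 0.
Proof. intros hy ha. unfold gap. rewrite !wsum_zero_all. ring.
  - intros j hj. apply Lfeas_In in hj as [hj hr]. destruct (ha j hj) as [[h1 _]|[_ h2]].
    + lia.
    + lra.
  - intros j hj. apply Lmax_In in hj as [hj hr]. destruct (ha j hj) as [[_ h2]|[h1 _]].
    + lra.
    + lia.
Qed.

Lemma subdiff_conj_face y : subdiff (conjugate Rf) g y <-> face (active x0) y.
Proof. split.
  - intro h. apply subdiff_conj_inv in h as [hy hs]. split; auto.
    apply gap_zero_active; auto. rewrite subdiff_iff in hs by auto. specialize (hs x0 hx0).
    rewrite dot_subr in hs. pose proof (gap_eq y). pose proof (gap_eq x0).
    rewrite (active_gap_zero x0) in H0 by auto. lra.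
  - intros [hy ha]. apply subdiff_conj; auto. apply subdiff_iff; auto. intros z hz.
    pose proof (gap_eq y). pose proof (gap_eq z). pose proof (gap_nonneg z hz).
    rewrite (active_gap_zero y) in H by auto. rewrite dot_subr. lra. Qed.

End GapFunction.

Lemma ell_line2 i (x x0 : vec N) t : ell i (vadd x (vscale t (vsub x x0))) = ell i x + t * (ell i x - ell i x0).
Proof. rewrite ell_line, dot_subr. unfold ell. ring. Qed.

Lemma ell_seg i (x w : vec N) t : ell i (vadd x (vscale t (vsub w x))) = (1 - t) * ell i x + t * ell i w.
Proof. rewrite ell_line, dot_subr. unfold ell. ring. Qed.

Lemma Rval_eq (x : vec N) i : (1 <= i <= k)%nat -> (forall j, (1 <= j <= k)%nat -> ell j x <= ell i x) -> Rval x = ell i x.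
Proof. intros hi h. apply Rle_antisym. apply Rval_le; auto. apply ell_le_Rval; auto. Qed.

Lemma active_max_attained (x : vec N) : exists i0, (1 <= i0 <= k)%nat /\ active x i0 /\ Rval x = ell i0 x.
Proof. destruct (Rval_attained x) as [i [hi e]]. exists i. split; [auto|split; [left; split; auto|auto]]. Qed.

Lemma face_self x0 : feas x0 -> face (active x0) x0.
Proof. intros; split; auto. Qed.

Lemma inactive_near x i0 : feas x -> (1 <= i0 <= k)%nat -> Rval x = ell i0 x ->
  exists d, 0 < d /\ forall y, vnorm (vsub y x) < d -> forall j, (1 <= j <= m)%nat -> ~ active x j ->
    ((j <= k)%nat -> ell j y < ell i0 y) /\ ((k + 1 <= j)%nat -> ell j y < 0).
Proof.
  intros hx hi0 ei0.
  destruct (near_all (seq 1 m) x (fun j y => ~ active x j ->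
     ((j <= k)%nat -> ell j y < ell i0 y) /\ ((k + 1 <= j)%nat -> ell j y < 0))) as [d [hd Hd]].
  - intros j hj. apply in_seq in hj. destruct (classic (active x j)) as [ha|hna].
    { exists 1; split; [lra|]. intros; contradiction. }
    destruct (Compare_dec.le_lt_dec j k).
    + destruct (dot_lt_near (vsub (a j) (a i0)) x (alpha i0 - alpha j)) as [dd [hdd Hdd]].
      { rewrite dot_subl. assert (ell j x < ell i0 x).
        { rewrite <- ei0. destruct (ell_le_Rval x j ltac:(lia)); auto.
          exfalso; apply hna. left; split; [lia|auto]. }
        unfold ell in H; lra. }
      exists dd; split; auto. intros y hy _. specialize (Hdd y hy).
      rewrite dot_subl in Hdd. unfold ell. split; intros; [lra|lia].
    + destruct (dot_lt_near (a j) x (- alpha j)) as [dd [hdd Hdd]].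
      { destruct (hx j ltac:(lia)); [lra|]. exfalso; apply hna. right; split; [lia|lra]. }
      exists dd; split; auto. intros y hy _. specialize (Hdd y hy). unfold ell. split; intros; [lia|lra].
  - exists d. split; auto. intros y hy j hj. apply Hd; auto. apply in_seq; lia.
Qed.

Lemma aff_face_active (I : nat -> Prop) i0 y : I i0 -> (1 <= i0 <= k)%nat -> aff (face I) y ->
  (forall i, I i -> (1 <= i <= k)%nat -> ell i y = ell i0 y) /\
  (forall i, I i -> (k + 1 <= i <= m)%nat -> ell i y = 0).
Proof.
  intros hi0 hk0 hy. split.
  - intros i hai hi.
    pose proof (aff_affine (face I) (vsub (a i) (a i0)) (alpha i0 - alpha i) y) as hh.
    rewrite dot_subl in hh. unfold ell. enough (dot (a i) y - dot (a i0) y + (alpha i0 - alpha i) = 0) by lra.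
    apply hh; auto. intros w [hw haw]. rewrite dot_subl.
    destruct (haw i hai) as [[_ e1]|[hr _]]; [|lia].
    destruct (haw i0 hi0) as [[_ e2]|[hr _]]; [|lia].
    unfold ell in *. lra.
  - intros i hai hi.
    pose proof (aff_affine (face I) (a i) (- alpha i) y) as hh.
    unfold ell. enough (dot (a i) y + - alpha i = 0) by lra. apply hh; auto. intros w [hw haw].
    destruct (haw i hai) as [[hr _]|[_ e1]]; [lia|]. lra.
Qed.

Lemma M_ri_face x0 x : feas x -> active x = active x0 -> ri (face (active x0)) x.
Proof.
  intros hx hax. split; [split; auto; rewrite hax; auto|]. rewrite <- hax.
  destruct (active_max_attained x) as [i0 [hi0 [hai0 ei0]]].
  destruct (inactive_near x i0 hx hi0 ei0) as [d [hd Hd]].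
  exists d; split; auto. intros y hy hyd.
  destruct (aff_face_active (active x) i0 y hai0 hi0 hy) as [hmaxeq hfeq].
  assert (hmaxle : forall j, (1 <= j <= k)%nat -> ell j y <= ell i0 y).
  { intros j hj. destruct (classic (active x j)).
    - rewrite hmaxeq; auto; lra.
    - left. apply (Hd y hyd j); auto; lia. }
  assert (hRy : Rval y = ell i0 y) by (apply Rval_eq; auto).
  split.
  - intros j hj. change (ell j y <= 0). destruct (classic (active x j)).
    + rewrite hfeq; auto. lra.
    + left. apply (Hd y hyd j); auto; lia.
  - intros i hai. destruct (active_range x i hai) as [h1 h2]. destruct (Compare_dec.le_lt_dec i k).
    + left. split; [lia|]. rewrite hRy, hmaxeq; auto; lia.
    + right. split; [lia|]. specialize (hfeq i hai ltac:(lia)). unfold ell in hfeq. lra.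
Qed.

Lemma ri_face_M x0 x : feas x0 -> ri (face (active x0)) x -> feas x /\ active x = active x0.
Proof.
  intros hx0 [[hx hax] [eps [heps H]]]. split; auto.
  apply pred_ext; intro j. split; [|auto].
  intro hj. apply NNPP. intro hnj.
  destruct (extension_near x x0 eps heps) as [t [ht hnear]].
  set (x' := vadd x (vscale t (vsub x x0))) in hnear.
  assert (hx' : face (active x0) x') by (apply H; [apply aff_two; [split; auto|apply face_self; auto]|auto]).
  destruct hx' as [hfx' hax'].
  destruct (active_max_attained x0) as [i0 [hi0 [hai0 ei0]]].
  destruct (active_range x j hj) as [hj1 hj2].
  destruct (Compare_dec.le_lt_dec j k).
  - destruct hj as [[_ ej]|[hr _]]; [|lia].
    assert (e0 : Rval x = ell i0 x) by (destruct (hax i0 hai0) as [[_ e]|[hr _]]; [auto|lia]).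
    assert (e0' : Rval x' = ell i0 x') by (destruct (hax' i0 hai0) as [[_ e]|[hr _]]; [auto|lia]).
    assert (hjx0 : ell j x0 < ell i0 x0).
    { pose proof (ell_le_Rval x0 j ltac:(lia)) as hle. rewrite <- ei0. destruct hle as [h|h]; auto. exfalso; apply hnj.
      left; split; [lia|auto]. }
    pose proof (ell_le_Rval x' j ltac:(lia)).
    unfold x' in *. rewrite !ell_line2 in *. nra.
  - destruct hj as [[hr _]|[_ ej]]; [lia|].
    assert (hjx0 : dot (a j) x0 - alpha j < 0).
    { pose proof (hx0 j ltac:(lia)) as hle. destruct hle; auto. exfalso; apply hnj. right; split; [lia|lra]. }
    pose proof (hfx' j ltac:(lia)) as hle. unfold x' in hle. 
    change (ell j (vadd x (vscale t (vsub x x0))) <= 0) in hle. rewrite ell_line2 in hle.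
    unfold ell in *. nra.
Qed.

Lemma closure_M_face x0 x : feas x0 -> closure (M_I k m a alpha (active x0)) x -> face (active x0) x.
Proof.
  intros hx0 hc.
  assert (hS : forall y, M_I k m a alpha (active x0) y -> feas y /\ active y = active x0) by (intro; apply M_active_iff).
  split.
  - intros j hj. apply (closure_dot_le _ (a j) x (- alpha j) hc). intros y hy. apply hS in hy as [hy _].
    specialize (hy j hj). lra.
  - intros i hai. destruct (active_range x0 i hai) as [h1 h2]. destruct (Compare_dec.le_lt_dec i k).
    + left; split; [lia|]. symmetry. apply Rval_eq; [lia|]. intros j hj.
      pose proof (closure_dot_le _ (vsub (a j) (a i)) x (alpha i - alpha j) hc) as hh.
      rewrite dot_subl in hh. unfold ell.
      enough (dot (a j) x - dot (a i) x + (alpha i - alpha j) <= 0) by lra.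
      apply hh. intros y hy. apply hS in hy as [hy hay]. rewrite dot_subl.
      rewrite <- hay in hai. destruct hai as [[_ e]|[hr _]]; [|lia].
      pose proof (ell_le_Rval y j hj). unfold ell in *; lra.
    + right; split; [lia|]. apply Rle_antisym.
      * enough (dot (a i) x + - alpha i <= 0) by lra. apply (closure_dot_le _ (a i) x (- alpha i) hc).
        intros y hy. apply hS in hy as [hy _]. specialize (hy i ltac:(lia)). lra.
      * enough (dot (vscale (-1) (a i)) x + alpha i <= 0) by (rewrite dot_scalel in H; lra).
        apply (closure_dot_le _ _ x (alpha i) hc). intros y hy. apply hS in hy as [hy hay].
        rewrite <- hay in hai. destruct hai as [[hr _]|[_ e]]; [lia|]. rewrite dot_scalel. lra.
Qed.

Lemma segment_active x0 x t : feas x0 -> face (active x0) x -> 0 < t <= 1 ->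
  feas (vadd x (vscale t (vsub x0 x))) /\ active (vadd x (vscale t (vsub x0 x))) = active x0.
Proof.
  intros hx0 [hx hax] [ht ht1].
  destruct (active_max_attained x0) as [i0 [hi0 [hai0 ei0]]].
  set (z := vadd x (vscale t (vsub x0 x))).
  assert (hRx : Rval x = ell i0 x) by (destruct (hax i0 hai0) as [[_ e]|[hr _]]; [auto|lia]).
  assert (hz_max : forall j, (1 <= j <= k)%nat -> ell j z <= ell i0 z).
  { intros j hj. unfold z. rewrite !ell_seg. pose proof (ell_le_Rval x j hj). pose proof (ell_le_Rval x0 j hj). nra. }
  assert (hRz : Rval z = ell i0 z) by (apply Rval_eq; auto).
  assert (hzf : feas z).
  { intros j hj. change (ell j z <= 0). unfold z. rewrite ell_seg. specialize (hx j hj). specialize (hx0 j hj).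
    change (ell j x <= 0) in hx. change (ell j x0 <= 0) in hx0. nra. }
  split; auto. apply pred_ext; intro j. split.
  - intro hj. apply NNPP; intro hnj. destruct (active_range z j hj) as [hj1 hj2].
    destruct (Compare_dec.le_lt_dec j k).
    + destruct hj as [[_ e]|[hr _]]; [|lia].
      assert (ell j x0 < ell i0 x0).
      { pose proof (ell_le_Rval x0 j ltac:(lia)) as hle. rewrite <- ei0. destruct hle; auto.
        exfalso; apply hnj. left; split; [lia|auto]. }
      pose proof (ell_le_Rval x j ltac:(lia)). rewrite hRz in e. unfold z in e. rewrite !ell_seg in e. nra.
    + destruct hj as [[hr _]|[_ e]]; [lia|].
      assert (ell j x0 < 0).
      { pose proof (hx0 j ltac:(lia)) as hle. change (ell j x0 <= 0) in hle.
        destruct hle as [hle|hle]; auto. exfalso; apply hnj. right; split; [lia|unfold ell in hle; lra]. }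
      pose proof (hx j ltac:(lia)) as hle2. change (ell j x <= 0) in hle2.
      assert (hz0 : ell j z = 0) by (unfold ell; lra). unfold z in hz0. rewrite ell_seg in hz0. nra.
  - intro hj. destruct (active_range x0 j hj) as [hj1 hj2]. pose proof (hax j hj) as hxj.
    destruct (Compare_dec.le_lt_dec j k).
    + left; split; [lia|]. destruct hxj as [[_ e1]|[hr _]]; [|lia]. destruct hj as [[_ e2]|[hr _]]; [|lia].
      symmetry. rewrite hRz. unfold z. rewrite !ell_seg. rewrite e1, e2, hRx, ei0. ring.
    + right; split; [lia|]. destruct hxj as [[hr _]|[_ e1]]; [lia|]. destruct hj as [[hr _]|[_ e2]]; [lia|].
      unfold z. rewrite dot_addr, dot_scaler, dot_subr. rewrite e1, e2. ring.
Qed.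

Lemma face_closure_M x0 x : feas x0 -> face (active x0) x -> closure (M_I k m a alpha (active x0)) x.
Proof.
  intros hx0 hx eps heps.
  destruct (segment_near x x0 eps heps) as [t [ht hnear]].
  eexists; split; [|exact hnear]. apply M_active_iff, segment_active; auto.
Qed.

Lemma Mst_dual_stratum x0 : Mst_I k m a (active x0) = dual_stratum (active x0).
Proof. unfold Mst_I, dual_stratum. apply msum_ri_conv_cone.
  - apply Lmax_NoDup. - apply Lfeas_NoDup. - apply Lmax_Lfeas_disj. - apply Lmax_active_nonempty.
  - rewrite Lfeas_In. lia.
  - intro i; rewrite Lmax_In; tauto. - intro i; rewrite Lfeas_In; tauto. Qed.

Lemma ri_subgrads x0 : ri (subgrads (active x0)) = dual_stratum (active x0).
Proof. apply ri_pcomb. apply Lmax_NoDup. apply Lfeas_NoDup. apply Lmax_Lfeas_disj. apply Lmax_active_nonempty. Qed.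

Lemma dual_stratum_nonempty x0 : exists g, dual_stratum (active x0) g.
Proof. eexists. apply spcomb_barycenter. apply Lmax_active_nonempty. Qed.

Lemma dual_stratum_subgrads I g : dual_stratum I g -> subgrads I g.
Proof. apply spcomb_pcomb. Qed.

Lemma Jmap_primal x0 : feas x0 -> Jmap Rf (M_I k m a alpha (active x0)) = dual_stratum (active x0).
Proof. intro hx0. apply pred_ext; intro g. split.
  - intros [x [hx hr]]. apply M_active_iff in hx as [hx hax]. rewrite subdiff_polyR, hax, ri_subgrads in hr by auto. auto.
  - intro hg. exists x0. split; [apply M_active_iff; auto|]. rewrite subdiff_polyR, ri_subgrads by auto. auto. Qed.

Lemma subdiff_conj_dual_stratum x0 g : feas x0 -> dual_stratum (active x0) g -> subdiff (conjugate Rf) g = face (active x0).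
Proof. intros hx0 (lam & mu & hl & hm & pl & pm & sl & eg). apply pred_ext; intro y.
  apply (subdiff_conj_face x0 hx0 g lam mu); auto. Qed.

Lemma ri_face x0 : feas x0 -> ri (face (active x0)) = M_I k m a alpha (active x0).
Proof. intro hx0. apply pred_ext; intro x. rewrite M_active_iff. split.
  - apply ri_face_M; auto. - intros [h1 h2]. apply M_ri_face; auto. Qed.

Lemma Jmap_dual x0 : feas x0 -> Jmap (conjugate Rf) (dual_stratum (active x0)) = M_I k m a alpha (active x0).
Proof. intro hx0. apply pred_ext; intro x. split.
  - intros [g [hg hr]]. rewrite (subdiff_conj_dual_stratum x0 g), ri_face in hr; auto.
  - intro hx. destruct (dual_stratum_nonempty x0) as [g hg]. exists g. split; auto.
    rewrite (subdiff_conj_dual_stratum x0 g), ri_face; auto. Qed.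

Lemma closure_M x0 : feas x0 -> closure (M_I k m a alpha (active x0)) = face (active x0).
Proof. intro hx0. apply pred_ext; intro x. split. apply closure_M_face; auto. apply face_closure_M; auto. Qed.

Lemma closure_dual_stratum x0 : feas x0 -> closure (dual_stratum (active x0)) = subgrads (active x0).
Proof. intro hx0. apply pred_ext; intro g. split.
  - intro hc. rewrite <- subdiff_polyR by auto. apply subdiff_iff; auto. intros y hy.
    enough (dot (vsub y x0) g + (Rval x0 - Rval y) <= 0) by (rewrite dot_comm in H; lra).
    apply (closure_dot_le _ _ g _ hc). intros h hh. apply dual_stratum_subgrads in hh. rewrite <- subdiff_polyR in hh by auto.
    rewrite subdiff_iff in hh by auto. specialize (hh y hy). rewrite dot_comm. lra.
  - intro hg. apply pcomb_closure_spcomb; auto. apply Lmax_active_nonempty. Qed.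

Definition num_active (z : vec N) : nat := length (filter (fun i => inb (active z i)) (seq 1 m)).

Lemma num_active_lt z z' j : (forall i, active z' i -> active z i) -> active z j -> ~ active z' j ->
  (num_active z' < num_active z)%nat.
Proof. intros h hj hnj. unfold num_active. apply filter_len_lt.
  - intros i _ e. apply inb_true. apply h. apply inb_true; auto.
  - exists j. split; [apply in_seq; pose proof (active_range z j hj); lia|].
    split.
    + unfold inb; destruct excluded_middle_informative; [contradiction|reflexivity].
    + apply inb_true; auto. Qed.

Lemma descent_step z g d j : feas z -> subdiff Rf z g -> active z j ->
  (forall i, active z i -> ((1 <= i <= k)%nat -> dot (a i) d <= dot g d) /\
                           ((k + 1 <= i <= m)%nat -> dot (a i) d <= 0)) ->
  ((1 <= j <= k)%nat -> dot (a j) d < dot g d) -> ((k + 1 <= j <= m)%nat -> dot (a j) d < 0) ->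
  exists z', feas z' /\ subdiff Rf z' g /\ (forall i, active z' i -> active z i) /\ ~ active z' j.
Proof.
  intros hz hs hj hd hdj1 hdj2. set (gd := dot g d). pose proof Hk.
  destruct (inactive_persist z d gd hz) as [t0 [ht0 Ht0]].
  set (t := t0 / 2). assert (ht : 0 < t < t0) by (unfold t; lra).
  set (z' := vadd z (vscale t d)).
  assert (hweak : forall i, (1 <= i <= m)%nat ->
    ((i <= k)%nat -> ell i z' <= Rval z + t * gd) /\ ((k + 1 <= i)%nat -> ell i z' <= 0)).
  { intros i hi. destruct (classic (active z i)) as [ha|hna].
    - destruct (hd i ha) as [hd1 hd2]. unfold z'. rewrite ell_line. split; intro.
      + destruct ha as [[_ e]|[hr _]]; [|lia]. specialize (hd1 ltac:(lia)). fold gd in hd1. nra.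
      + destruct ha as [[hr _]|[_ e]]; [lia|]. specialize (hd2 ltac:(lia)). unfold ell. nra.
    - destruct (Ht0 t ht i hi hna) as [h1 h2]. split; intro; left; auto. }
  assert (hstrict : forall i, (1 <= i <= m)%nat -> (active z i -> i = j) ->
    ((i <= k)%nat -> ell i z' < Rval z + t * gd) /\ ((k + 1 <= i)%nat -> ell i z' < 0)).
  { intros i hi hij. destruct (classic (active z i)) as [ha|hna]; [|apply Ht0; auto].
    specialize (hij ha). subst i. unfold z'. rewrite ell_line. split; intro.
    - destruct ha as [[_ e]|[hr _]]; [|lia]. specialize (hdj1 ltac:(lia)). fold gd in hdj1. nra.
    - destruct ha as [[hr _]|[_ e]]; [lia|]. specialize (hdj2 ltac:(lia)). unfold ell. nra. }
  assert (hz' : feas z') by (intros i hi; apply (hweak i ltac:(lia)); lia).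
  (* [g] is a subgradient at [z], so the bound [R z' <= R z + t <g,d>] is an equality. *)
  assert (hRz' : Rval z' = Rval z + t * gd).
  { apply Rle_antisym.
    - apply Rval_le. intros i hi. apply (hweak i ltac:(lia)). lia.
    - rewrite subdiff_iff in hs by auto. specialize (hs z' hz').
      replace (vsub z' z) with (vscale t d) in hs by (symmetry; apply vsub_line).
      rewrite dot_scaler in hs. fold gd in hs. lra. }
  assert (hnot : forall i, active z' i -> (active z i -> i = j) -> False).
  { intros i hai hij. pose proof (active_range z' i hai). destruct (hstrict i ltac:(lia) hij) as [h1 h2].
    destruct hai as [[hr e]|[hr e]].
    - specialize (h1 ltac:(lia)). lra.
    - specialize (h2 ltac:(lia)). unfold ell in h2. lra. }
  exists z'. split; [auto|split; [|split]].
  - rewrite subdiff_iff in * by auto. intros y hy. specialize (hs y hy).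
    rewrite dot_subr in *. unfold z' at 2. rewrite dot_addr, dot_scaler. fold gd. lra.
  - intros i hai. apply NNPP. intro hn. apply (hnot i hai). intro h; contradiction.
  - intro hai. apply (hnot j hai). auto.
Qed.

Definition active_idx (z : vec N) := Lmax (active z) ++ Lfeas (active z).

Definition active_homog (z : vec N) := homog_fam (Lmax (active z)) a a.

Lemma active_idx_NoDup z : NoDup (active_idx z).
Proof. apply NoDup_app_disj; [apply Lmax_NoDup|apply Lfeas_NoDup|apply Lmax_Lfeas_disj]. Qed.

Lemma homog_rep_iff z g kap :
  homog g 1 = lincomb_idx kap (active_homog z) (active_idx z) <->
  sumR (map kap (Lmax (active z))) = 1 /\
  g = vadd (lincomb_idx kap a (Lmax (active z))) (lincomb_idx kap a (Lfeas (active z))).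
Proof.
  unfold active_idx, active_homog. rewrite lincomb_homog_fam by apply Lmax_Lfeas_disj. split.
  - intro e. apply homog_inj in e as [e1 e2]. auto.
  - intros [e1 e2]. rewrite e1, <- e2. reflexivity.
Qed.

Lemma subdiff_homog_rep z g : feas z -> subdiff Rf z g ->
  exists kap, (forall i, 0 <= kap i) /\ homog g 1 = lincomb_idx kap (active_homog z) (active_idx z).
Proof.
  intros hz hsz. destruct (subdiff_subgrads z g hz hsz) as (lam & mu & hl & hm & sl & eg).
  exists (fun i => if inb (In i (Lmax (active z))) then lam i else mu i). split.
  - intro i; destruct inb; auto.
  - apply homog_rep_iff. split.
    + rewrite <- sl. apply sumR_map_ext. intros i hi. rewrite inb_In_true; auto.
    + rewrite eg. f_equal; apply lincomb_ext; intros i hi; [rewrite inb_In_true; auto|].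
      rewrite inb_In_false; auto. intro h; apply (Lmax_Lfeas_disj _ i h); auto.
Qed.

Lemma min_active_weight_pos z g j : feas z -> subdiff Rf z g ->
  (forall z', feas z' -> subdiff Rf z' g -> (num_active z <= num_active z')%nat) ->
  In j (active_idx z) ->
  exists kap, (forall i, 0 <= kap i) /\
    homog g 1 = lincomb_idx kap (active_homog z) (active_idx z) /\ 0 < kap j.
Proof.
  intros hz hsz hmin hj. set (b := active_homog z).
  assert (hb0 : forall i, In i (active_idx z) -> 0 <= dot (homog vzero 1) (b i)).
  { intros i _. rewrite dot_homog, dot_zerol. unfold b, active_homog, homog_fam. destruct inb; simpl; lra. }
  assert (hg0 : 0 < dot (homog vzero 1) (homog g 1)) by (rewrite dot_homog, dot_zerol; simpl; lra).
  destruct (farkas_positive_coeff (active_idx z) b (homog g 1) (homog vzero 1) j (active_idx_NoDup z)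
    hj hb0 hg0 (subdiff_homog_rep z g hz hsz)) as [h|[dh [hd1 [hd2 hd3]]]]; auto. exfalso.
  set (d := fun q => dh (Fin.FS q)).
  assert (hjz : active z j) by (apply in_app_iff in hj as [hj|hj];
    [apply Lmax_In in hj|apply Lfeas_In in hj]; tauto).
  assert (hs : dh Fin.F1 = - dot g d) by (rewrite dot_homog in hd2; unfold d; lra).
  assert (hb1 : forall i, In i (Lmax (active z)) -> dot (b i) dh = dot (a i) d - dot g d).
  { intros i hi. unfold b, active_homog. rewrite homog_fam_in, dot_homog by auto. fold d. lra. }
  assert (hb2 : forall i, In i (Lfeas (active z)) -> dot (b i) dh = dot (a i) d).
  { intros i hi. unfold b, active_homog.
    rewrite homog_fam_notin, dot_homog by (intro h; apply (Lmax_Lfeas_disj _ i h); auto). fold d. lra. }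
  destruct (descent_step z g d j hz hsz hjz) as [z' [hz' [hs' [hsub hnj]]]].
  - intros i hai. split; intro hi.
    + assert (hin : In i (Lmax (active z))) by (apply Lmax_In; auto).
      specialize (hd1 i (in_or_app _ _ _ (or_introl hin))). rewrite hb1 in hd1; auto. lra.
    + assert (hin : In i (Lfeas (active z))) by (apply Lfeas_In; auto).
      specialize (hd1 i (in_or_app _ _ _ (or_intror hin))). rewrite hb2 in hd1; auto.
  - intro hj1. assert (In j (Lmax (active z))) by (apply Lmax_In; auto). rewrite hb1 in hd3; auto. lra.
  - intro hj2. assert (In j (Lfeas (active z))) by (apply Lfeas_In; auto). rewrite hb2 in hd3; auto.
  - specialize (hmin z' hz' hs'). pose proof (num_active_lt z z' j hsub hjz hnj). lia.
Qed.

Lemma dual_strata_cover g x : feas x -> subdiff Rf x g -> exists z, feas z /\ dual_stratum (active z) g.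
Proof.
  intros hx hsx.
  (* A point with a minimal active set among those having [g] as a subgradient works. *)
  destruct (nat_measure_min num_active (fun z => feas z /\ subdiff Rf z g) x (conj hx hsx))
    as [z [[hz hsz] hmin]].
  exists z. split; auto.
  destruct (lincomb_all_pos (active_idx z) (active_homog z) (homog g 1) (subdiff_homog_rep z g hz hsz))
    as [kap [hk [ek pk]]].
  { intros j hj. apply min_active_weight_pos; auto. }
  apply homog_rep_iff in ek as [sk ek].
  exists kap, kap. repeat split; auto; intros i hi; apply pk, in_or_app; auto.
Qed.

Definition active_list (x : vec N) := filter (fun i => inb (active x i)) (seq 1 m).

Lemma active_active_list x : active x = (fun i => In i (active_list x)).
Proof. apply pred_ext; intro i. unfold active_list.
  rewrite filter_In, in_seq, inb_true. split.
  - intro h. pose proof (active_range x i h). split; auto; lia.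
  - tauto. Qed.

Definition strata_of (F : (nat -> Prop) -> vset N) (M : vset N) : Prop :=
  exists I, (exists x, M_I k m a alpha I x) /\ M = F I.

Lemma strata_of_iff F M : strata_of F M <-> exists x0, feas x0 /\ M = F (active x0).
Proof. split.
  - intros [I [[x hx] ->]]. pose proof (M_I_active I x hx). subst I. exists x. split; auto.
    apply M_active_iff in hx; tauto.
  - intros [x0 [hx0 ->]]. exists (active x0). split; auto. exists x0. apply M_active_iff; auto. Qed.

Lemma dual_strata_iff M : strata_of (Mst_I k m a) M <-> exists x0, feas x0 /\ M = dual_stratum (active x0).
Proof. rewrite strata_of_iff. split; intros [x0 [hx0 ->]]; exists x0; split; auto;
  [|symmetry]; apply Mst_dual_stratum. Qed.

(* Strata are indexed by active sets, which are sublists of [1..m]. *)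
Lemma strata_of_finite F : exists L, forall M, strata_of F M <-> In M L.
Proof.
  destruct (finite_image (sublists (seq 1 m)) (fun s => exists x, M_I k m a alpha (fun i => In i s) x)
     (fun s => F (fun i => In i s))) as [L HL].
  exists L. intro M. rewrite HL. split.
  - intros [I [[x hx] ->]]. pose proof (M_I_active I x hx). subst I. rewrite active_active_list in *.
    exists (active_list x). split; [apply filter_sublists|]. split; eauto.
  - intros [s [_ [hs ->]]]. exists (fun i => In i s); split; eauto. Qed.

Lemma M_active_self x0 : feas x0 -> M_I k m a alpha (active x0) x0.
Proof. intro; apply M_active_iff; auto. Qed.

Lemma M_active_inj x0 x1 : feas x0 -> feas x1 ->
  M_I k m a alpha (active x0) = M_I k m a alpha (active x1) -> active x0 = active x1.
Proof. intros h0 h1 e. pose proof (M_active_self x0 h0). rewrite e in H. apply M_active_iff in H; tauto. Qed.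

Lemma primal_stratification : stratification (edom Rf) (strata_of (M_I k m a alpha)).
Proof.
  split; [apply strata_of_finite|]. split; [|split; [|split; [|split]]].
  - intros M hM. apply strata_of_iff in hM as [x0 [hx0 ->]]. exists x0; apply M_active_self; auto.
  - intros M hM x hx. apply strata_of_iff in hM as [x0 [hx0 ->]]. apply M_active_iff in hx as [hx _].
    apply edom_polyR; auto.
  - intros x hx. apply edom_polyR in hx. exists (M_I k m a alpha (active x)).
    split; [apply strata_of_iff; eauto|apply M_active_self; auto].
  - intros M M' hM hM' hne x [h1 h2].
    apply strata_of_iff in hM as [x0 [hx0 ->]]. apply strata_of_iff in hM' as [x1 [hx1 ->]].
    apply M_active_iff in h1 as [_ e1]. apply M_active_iff in h2 as [_ e2]. apply hne. rewrite <- e1, <- e2. auto.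
  - intros M M' hM hM' [x [hx hcx]].
    apply strata_of_iff in hM as [x0 [hx0 ->]]. apply strata_of_iff in hM' as [x1 [hx1 ->]].
    rewrite closure_M in * by auto. apply M_active_iff in hx as [hx e]. destruct hcx as [_ hsub].
    intros y hy. apply M_active_iff in hy as [hy ey]. split; auto. rewrite ey, <- e. auto.
Qed.

Lemma dual_stratum_subdiff x0 g : feas x0 -> dual_stratum (active x0) g -> subdiff Rf x0 g.
Proof. intros h hg. rewrite subdiff_polyR by auto. apply dual_stratum_subgrads; auto. Qed.

Lemma dual_stratum_face_subdiff x0 g y : feas x0 -> dual_stratum (active x0) g -> face (active x0) y ->
  subdiff Rf y g.
Proof. intros h hg hy. assert (subdiff (conjugate Rf) g y) by (rewrite (subdiff_conj_dual_stratum x0 g); auto).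
  apply subdiff_conj_inv in H; tauto. Qed.

Lemma subdiff_dual_stratum_face x0 g y : feas x0 -> dual_stratum (active x0) g -> feas y ->
  subdiff Rf y g -> face (active x0) y.
Proof. intros h hg hy hs. rewrite <- (subdiff_conj_dual_stratum x0 g) by auto. apply subdiff_conj; auto. Qed.

Lemma dual_stratification : stratification (dom_subdiff (conjugate Rf)) (strata_of (Mst_I k m a)).
Proof.
  split; [apply strata_of_finite|]. split; [|split; [|split; [|split]]].
  - intros M hM. apply dual_strata_iff in hM as [x0 [hx0 ->]]. apply dual_stratum_nonempty.
  - intros M hM g hg. apply dual_strata_iff in hM as [x0 [hx0 ->]]. apply dom_subdiff_conj.
    exists x0. split; auto. apply dual_stratum_subdiff; auto.
  - intros g hg. apply dom_subdiff_conj in hg as [x [hx hs]].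
    destruct (dual_strata_cover g x hx hs) as [z [hz hgz]].
    exists (dual_stratum (active z)). split; auto. apply dual_strata_iff; eauto.
  - intros M M' hM hM' hne g [h1 h2].
    apply dual_strata_iff in hM as [x0 [hx0 ->]]. apply dual_strata_iff in hM' as [x1 [hx1 ->]].
    apply hne. assert (e : face (active x0) = face (active x1))
      by (rewrite <- (subdiff_conj_dual_stratum x0 g), <- (subdiff_conj_dual_stratum x1 g); auto).
    assert (e2 : active x0 = active x1) by (apply M_active_inj; auto; rewrite <- !ri_face, e by auto; auto).
    rewrite e2; auto.
  - intros M M' hM hM' [g [hg hcg]].
    apply dual_strata_iff in hM as [x0 [hx0 ->]]. apply dual_strata_iff in hM' as [x1 [hx1 ->]].
    rewrite closure_dual_stratum in * by auto. rewrite <- subdiff_polyR in * by auto.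
    assert (hF : face (active x0) x1) by (apply (subdiff_dual_stratum_face x0 g); auto).
    intros h hh. apply (dual_stratum_face_subdiff x0 h x1); auto.
Qed.

Lemma Jmap_strata I : (exists x, M_I k m a alpha I x) ->
  Jmap Rf (M_I k m a alpha I) = Mst_I k m a I /\ Jmap (conjugate Rf) (Mst_I k m a I) = M_I k m a alpha I.
Proof.
  intros [x hx]. pose proof (M_I_active I x hx). subst I. apply M_active_iff in hx as [hx _].
  rewrite Mst_dual_stratum. split; [apply Jmap_primal|apply Jmap_dual]; auto.
Qed.

Lemma strata_le_reversed x0 x1 : feas x0 -> feas x1 ->
  strat_le (M_I k m a alpha (active x0)) (M_I k m a alpha (active x1)) <->
  strat_le (dual_stratum (active x1)) (dual_stratum (active x0)).
Proof.
  intros hx0 hx1. unfold strat_le. rewrite closure_M, closure_dual_stratum by auto. split.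
  - intros h g hg. rewrite <- subdiff_polyR by auto.
    apply (dual_stratum_face_subdiff x1 g x0); auto. apply h, M_active_self; auto.
  - intros h x hx. destruct (dual_stratum_nonempty x1) as [g hg]. specialize (h g hg).
    rewrite <- subdiff_polyR in h by auto.
    destruct (subdiff_dual_stratum_face x1 g x0 hx1 hg hx0 h) as [_ hsub].
    apply M_active_iff in hx as [hx ex]. split; auto. rewrite ex; auto.
Qed.

Lemma polyR_mirror_stratifiable :
  mirror_stratifiable Rf (strata_of (M_I k m a alpha)) (strata_of (Mst_I k m a)).
Proof.
  split; [rewrite dom_subdiff_polyR; apply primal_stratification|]. split; [apply dual_stratification|].
  split; [|split; [|split]].
  - intros M hM. apply strata_of_iff in hM as [x0 [hx0 ->]]. rewrite Jmap_primal by auto.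
    apply dual_strata_iff; eauto.
  - intros M hM. apply dual_strata_iff in hM as [x0 [hx0 ->]]. rewrite Jmap_dual by auto.
    apply strata_of_iff; eauto.
  - intros M Mst hM hMst. apply strata_of_iff in hM as [x0 [hx0 ->]].
    apply dual_strata_iff in hMst as [x1 [hx1 ->]].
    rewrite Jmap_primal, Jmap_dual by auto. split.
    + intro e. rewrite <- (Jmap_dual x1) by auto. rewrite e. apply Jmap_dual; auto.
    + intro e. f_equal. apply M_active_inj; auto.
  - intros M M' hM hM'. apply strata_of_iff in hM as [x0 [hx0 ->]].
    apply strata_of_iff in hM' as [x1 [hx1 ->]]. rewrite !Jmap_primal by auto.
    apply strata_le_reversed; auto.
Qed.

End Poly.

Theorem proposition2p2 (N k m : nat) (a : nat -> vec N) (alpha : nat -> R)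
  (Hk : (1 <= k <= m)%nat)
  (Hdom : exists x, edom (polyR k m a alpha) x) :
  let Rf := polyR k m a alpha in
  let S := fun M : vset N => exists I, (exists x, M_I k m a alpha I x) /\ M = M_I k m a alpha I in
  let Sst := fun M : vset N => exists I, (exists x, M_I k m a alpha I x) /\ M = Mst_I k m a I in
  stratification (edom Rf) S /\
  (forall I, (exists x, M_I k m a alpha I x) ->
     Jmap Rf (M_I k m a alpha I) = Mst_I k m a I /\
     Jmap (conjugate Rf) (Mst_I k m a I) = M_I k m a alpha I) /\
  mirror_stratifiable Rf S Sst.
Proof.
  intros Rf S Sst.
  assert (Hfeas : exists x, feas N k m a alpha x)
    by (destruct Hdom as [x hx]; exists x; apply (edom_polyR N k m a alpha Hk); auto).
  split; [|split].
  - apply (primal_stratification N k m a alpha Hk).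
  - apply (Jmap_strata N k m a alpha Hk Hfeas).
  - apply (polyR_mirror_stratifiable N k m a alpha Hk Hfeas).
Qed.
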